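(* Let $s\geqslant1$. The Beth model $\mathcal{B}_s$ forces (at its root) the universal closures of all instances, with types $\leqslant s$, of the following axioms for lawless functionals ($1\leqslant n\leqslant s$): (LL1) $\exists\mathcal F^n(\forall y\leqslant x)(\mathcal F(y)=F^n(y))$; (LL2) $\mathcal F^n=\mathcal G^n\vee\mathcal F^n\neq\mathcal G^n$; (LL3) $\varphi(\mathcal H^n)\supset\exists x\forall\mathcal G^n[(\forall y<x)(\mathcal G(y)=\mathcal H(y))\supset\varphi(\mathcal G)]$, for every formula $\varphi$ of $LP_s$ with $sort(\varphi)\leqslant n$ having no free variables of type $n$ over non-lawlike functionals other than $\mathcal H^n$.
   Context: $sort(\varphi)$ is the maximal type of the free variables of $\varphi$ (0 if none); number variables have type 0, functional variables $F^n,A^n,\mathcal F^n$ have type $n$; non-lawlike variables of type $n$ are the $F^n$ and $\mathcal F^n$. Language $L_s$ ($s\geqslant1$). Variables: $x,y,z,\dots$ of type 0 (natural numbers); for $1\leqslant n\leqslant s$, variables $F^n,G^n,\dots$ (over $n$-functionals), $A^n,B^n,\dots$ (over lawlike $n$-functionals), $\mathcal{F}^n,\mathcal{G}^n,\dots$ (over lawless $n$-functionals). Constants $0$, $K^n$. Terms/$n$-functionals: number variables and $0$ are terms; type-$n$ variables and $K^n$ are $n$-functionals; $St,t+\tau,t\cdot\tau$ terms; $N^n(Z)$ an $n$-functional; $Z(t)=Ap^1(Z,t)$ a term for a 1-functional $Z$; $Z(t)=Ap^{n+1}(Z,t)$ an $n$-functional for an $(n+1)$-functional $Z$. Atomic formulas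 $t=_0\tau$, $Z=_nV$; formulas with $\bot,\wedge,\vee,\supset,\forall,\exists$, $\neg\varphi:=\varphi\supset\bot$. $LP_s$ adds atomic formulas $\vdash_z\varphi(\bar X)$ for terms $z$ and formulas $\varphi$ of $L_s$ with free variables in $\bar X$. Beth model $\mathcal{B}_s$. Path = maximal linearly ordered subset; path through $x$ = path containing $x$. $b^{(m)}$: length-$m$ sequences; $b^*$: finite sequences, $y\leqslant x$ iff $x$ is an initial segment of $y$. $a_0=\omega$, $d_0=\{\langle x\rangle:x\in\omega^*\}$, $\langle x\rangle\preccurlyeq_0\langle y\rangle$ iff $x\leqslant y$. For $k\geqslant1$: $a_k$ = partial $f:d_{k-1}\times\omega\dashrightarrow a_{k-1}$, monotonic ($y\preccurlyeq_{k-1}x\Rightarrow f(x,\cdot)\subseteq f(y,\cdot)$) and complete (for each path $S$ in $d_{k-1}$, $\bigcup_{x\in S}f(x,\cdot)$ total); $d_k=\bigcup_m a_0^{(m)}\times\dots\times a_k^{(m)}$, $x\preccurlyeq_ky$ iff $\langle x\rangle_i\leqslant\langle y\rangle_i$ for $i\leqslant k$, $lh(x)=m$. Nodes $M=d_{s-1}$, $\preccurlyeq=\preccurlyeq_{s-1}$, root $\varepsilon$; $\bar\alpha(k)=\langle\alpha_0,\dots,\alpha_{k-1}\rangle\in d_{k-1}$. Domains: $\omega$; $a_k$; $b_k=\{f\in a_k:f(\text{root},\cdot)\text{ total}\}$; $l_k=\{\nu_k(\xi):\xi\in c_k\}$, $c_k$ = maps $\xi:\omega\times a_{k-1}\to a_{k-1}$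 with each $\xi(n,\cdot)$ bijective, $\nu_k(\xi)(x,n)=\xi(n,\langle\langle x\rangle_{k-1}\rangle_n)$ if $n<lh(x)$, else undefined. Interpretations: $\widehat K^1(x,n)=0$, $\widehat K^{k+1}(x,n)=\widehat K^k$; usual $0,S,+,\cdot$; $N^k\mapsto S^k$ ($S^0(x)=x+1$, $S^{n+1}(f)=S^n\circ f$); at $\alpha$, $Ap^k(f,n)\mapsto f(\bar\alpha(k),n)$; $Z^{[\alpha]}$ is the possibly undefined value. $Val(\alpha,Z=_kV)=T$ iff both defined and equal; $Val(\alpha,\vdash_t\varphi)=T$ iff $t^{[\alpha]}$ defined and some $\gamma\succcurlyeq\alpha$ with $lh(\gamma)=t^{[\alpha]}$ forces $\varphi$. Forcing (Beth): atomic: every path through $\alpha$ meets $\beta$ with $Val=T$; $\alpha\not\Vdash\bot$; $\wedge$ componentwise; $\vee$ and $\exists$: every path through $\alpha$ meets a node forcing a disjunct / an instance $\psi(c)$; $\supset$: every $\beta\preccurlyeq\alpha$ forcing the antecedent forces the consequent; $\forall$: all instances forced at $\alpha$. $\mathcal B_s\Vdash\varphi$ iff $\varepsilon\Vdash\varphi$. *)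

From Stdlib Require Import Arith Bool List ClassicalEpsilon.
Import ListNotations.

(* R k  : raw k-functionals (R 0 = nat);
                 Tup k : raw tuples (x_0,...,x_k) of lists, x_i : list (R i).
   R (S k) = Tup k -> nat -> option (R k)   (partial maps d_k x w -> a_k). *)
Fixpoint RT (k : nat) : Type * Type :=
  match k with
  | 0 => @pair Type Type nat (list nat)
  | S k' => @pair Type Type (snd (RT k') -> nat -> option (fst (RT k')))
             (snd (RT k') * list (snd (RT k') -> nat -> option (fst (RT k'))))%type
  end.
Definition R (k : nat) : Type := fst (RT k).
Definition Tup (k : nat) : Type := snd (RT k).

Definition lastc (k : nat) : Tup k -> list (R k) :=
  match k return Tup k -> list (R k) with
  | 0 => fun x => x
  | S k' => fun x => snd x
  end.
Definition lh (k : nat) (x : Tup k) : nat := length (lastc k x).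

(* y <= x iff x is an initial segment of y ; we write prefix x y *)
Definition prefix {A : Type} (l1 l2 : list A) : Prop := exists l, l2 = l1 ++ l.

Fixpoint leT (k : nat) : Tup k -> Tup k -> Prop :=
  match k return Tup k -> Tup k -> Prop with
  | 0 => fun x y => prefix (y : list nat) (x : list nat)
  | S k' => fun x y => leT k' (fst x) (fst y) /\ prefix (snd y) (snd x)
  end.

Definition chain (k : nat) (V P : Tup k -> Prop) : Prop :=
  (forall x, P x -> V x) /\
  (forall x y, P x -> P y -> leT k x y \/ leT k y x).
Definition isPath (k : nat) (V P : Tup k -> Prop) : Prop :=
  chain k V P /\
  (forall Q, chain k V Q -> (forall x, P x -> Q x) -> forall x, Q x -> P x).

(* lev k = (membership in a_k, membership in d_k).
   Elements of a_(k+1) are represented canonically: undefined outside d_k. *)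
Fixpoint lev (k : nat) : (R k -> Prop) * (Tup k -> Prop) :=
  match k return (R k -> Prop) * (Tup k -> Prop) with
  | 0 => ((fun _ => True), (fun _ => True))
  | S k' =>
      let inAk := fst (lev k') in
      let vk := snd (lev k') in
      let inAS : R (S k') -> Prop := fun f =>
        (forall (x : Tup k') m v, f x m = Some v -> vk x /\ inAk v) /\
        (forall (x y : Tup k'), vk x -> vk y -> leT k' y x ->
            forall m v, f x m = Some v -> f y m = Some v) /\
        (forall P, isPath k' vk P -> forall m, exists x, P x /\ f x m <> None) in
      (inAS, fun x : Tup (S k') =>
               vk (fst x) /\ Forall inAS (snd x) /\ length (snd x) = lh k' (fst x))
  end.
Definition inA (k : nat) : R k -> Prop := fst (lev k).
Definition validD (k : nat) : Tup k -> Prop := snd (lev k).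

Fixpoint rootT (k : nat) : Tup k :=
  match k return Tup k with
  | 0 => @nil nat
  | S k' => (rootT k', @nil (R (S k')))
  end.

Definition dflt (k : nat) : R k :=
  match k return R k with
  | 0 => 0
  | S k' => fun _ _ => None
  end.

Definition inB (k : nat) (f : R (S k)) : Prop :=
  inA (S k) f /\ forall m, f (rootT k) m <> None.

Definition inL (k : nat) (f : R (S k)) : Prop :=
  exists xi : nat -> R k -> R k,
    (forall m,
        (forall v, inA k v -> inA k (xi m v)) /\
        (forall v w, inA k v -> inA k w -> xi m v = xi m w -> v = w) /\
        (forall w, inA k w -> exists v, inA k v /\ xi m v = w)) /\
    (forall (x : Tup k) m,
        (validD k x /\ m < lh k x -> f x m = Some (xi m (nth m (lastc k x) (dflt k)))) /\
        (~ (validD k x /\ m < lh k x) -> f x m = None)).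

Fixpoint Kc (n : nat) : R (S n) :=
  match n return R (S n) with
  | 0 => fun (x : Tup 0) (m : nat) =>
           if excluded_middle_informative (validD 0 x) then Some (0 : R 0) else None
  | S n' => fun (x : Tup (S n')) (m : nat) =>
           if excluded_middle_informative (validD (S n') x) then Some (Kc n') else None
  end.

Fixpoint Sfun (n : nat) : R n -> R n :=
  match n return R n -> R n with
  | 0 => fun (v : nat) => S v
  | S n' => fun (f : R (S n')) (x : Tup n') (m : nat) => option_map (Sfun n') (f x m)
  end.

Fixpoint trunc (d j : nat) : Tup (d + j) -> Tup j :=
  match d return Tup (d + j) -> Tup j with
  | 0 => fun x => x
  | S d' => fun x => trunc d' j (fst x)
  end.
Definition trunc_opt (k j : nat) (x : Tup k) : option (Tup j) :=
  match le_dec j k with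
  | left h => Some (trunc (k - j) j (eq_rect k Tup x _ (eq_sym (Nat.sub_add j k h))))
  | right _ => None
  end.

(* Syntax.  Functional variables: kind (F general, A lawlike, L lawless),
   type S n (n : nat), index i.   tm n : terms of type n (tm 0 = number terms). *)
Inductive kind : Type := KF | KA | KL.
Definition kind_eqb (a b : kind) : bool :=
  match a, b with KF, KF | KA, KA | KL, KL => true | _, _ => false end.

Inductive tm : nat -> Type :=
| tvar0 (i : nat) : tm 0
| tzero : tm 0
| tS (t : tm 0) : tm 0
| tplus (t u : tm 0) : tm 0
| tmult (t u : tm 0) : tm 0
| tV (k : kind) (n i : nat) : tm (S n)
| tK (n : nat) : tm (S n)
| tN (n : nat) (Z : tm (S n)) : tm (S n)
| tAp (n : nat) (Z : tm (S n)) (t : tm 0) : tm n.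

Inductive fm : Type :=
| Fbot
| Feq (n : nat) (t u : tm n)
| Fand (p q : fm) | For (p q : fm) | Fimp (p q : fm)
| Fall0 (i : nat) (p : fm) | Fex0 (i : nat) (p : fm)
| FallV (k : kind) (n i : nat) (p : fm)
| FexV (k : kind) (n i : nat) (p : fm)
| Fprov (t : tm 0) (p : fm).

Definition Fneg (p : fm) : fm := Fimp p Fbot.

Fixpoint wf_tm (s : nat) {n : nat} (t : tm n) : Prop :=
  match t with
  | tvar0 _ | tzero => True
  | tS t => wf_tm s t
  | tplus t u | tmult t u => wf_tm s t /\ wf_tm s u
  | tV _ n _ | tK n => S n <= s
  | tN n Z => S n <= s /\ wf_tm s Z
  | tAp n Z t => S n <= s /\ wf_tm s Z /\ wf_tm s t
  end.
Fixpoint wf_fm (s : nat) (allowP : bool) (p : fm) : Prop :=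
  match p with
  | Fbot => True
  | Feq n t u => n <= s /\ wf_tm s t /\ wf_tm s u
  | Fand p q | For p q | Fimp p q => wf_fm s allowP p /\ wf_fm s allowP q
  | Fall0 _ p | Fex0 _ p => wf_fm s allowP p
  | FallV _ n _ p | FexV _ n _ p => S n <= s /\ wf_fm s allowP p
  | Fprov t q => allowP = true /\ wf_tm s t /\ wf_fm s false q
  end.
Definition wfL (s : nat) (p : fm) : Prop := wf_fm s false p.
Definition wfLP (s : nat) (p : fm) : Prop := wf_fm s true p.

Fixpoint tm_has0 (i : nat) {n : nat} (t : tm n) : Prop :=
  match t with
  | tvar0 j => i = j
  | tzero | tV _ _ _ | tK _ => False
  | tS t | tN _ t => tm_has0 i t
  | tplus t u | tmult t u | tAp _ t u => tm_has0 i t \/ tm_has0 i u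
  end.
Fixpoint tm_hasV (k : kind) (n i : nat) {m : nat} (t : tm m) : Prop :=
  match t with
  | tV k' n' i' => k = k' /\ n = n' /\ i = i'
  | tvar0 _ | tzero | tK _ => False
  | tS t | tN _ t => tm_hasV k n i t
  | tplus t u | tmult t u | tAp _ t u => tm_hasV k n i t \/ tm_hasV k n i u
  end.
Fixpoint free0 (i : nat) (p : fm) : Prop :=
  match p with
  | Fbot => False
  | Feq _ t u => tm_has0 i t \/ tm_has0 i u
  | Fand p q | For p q | Fimp p q => free0 i p \/ free0 i q
  | Fall0 j p | Fex0 j p => i <> j /\ free0 i p
  | FallV _ _ _ p | FexV _ _ _ p => free0 i p
  | Fprov t q => tm_has0 i t \/ free0 i q
  end.
Fixpoint freeV (k : kind) (n i : nat) (p : fm) : Prop :=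
  match p with
  | Fbot => False
  | Feq _ t u => tm_hasV k n i t \/ tm_hasV k n i u
  | Fand p q | For p q | Fimp p q => freeV k n i p \/ freeV k n i q
  | Fall0 _ p | Fex0 _ p => freeV k n i p
  | FallV k' n' i' p | FexV k' n' i' p => ~ (k = k' /\ n = n' /\ i = i') /\ freeV k n i p
  | Fprov t q => tm_hasV k n i t \/ freeV k n i q
  end.

Definition isL (n h : nat) (k : kind) (n' i' : nat) : bool :=
  kind_eqb k KL && Nat.eqb n' n && Nat.eqb i' h.
Fixpoint renT (n h g : nat) {m : nat} (t : tm m) : tm m :=
  match t in tm m return tm m with
  | tvar0 j => tvar0 j
  | tzero => tzero
  | tS t => tS (renT n h g t)
  | tplus t u => tplus (renT n h g t) (renT n h g u)
  | tmult t u => tmult (renT n h g t) (renT n h g u)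
  | tV k' n' i' => if isL n h k' n' i' then tV k' n' g else tV k' n' i'
  | tK n' => tK n'
  | tN n' Z => tN n' (renT n h g Z)
  | tAp n' Z t => tAp n' (renT n h g Z) (renT n h g t)
  end.
Fixpoint renL (n h g : nat) (p : fm) : fm :=
  match p with
  | Fbot => Fbot
  | Feq m t u => Feq m (renT n h g t) (renT n h g u)
  | Fand p q => Fand (renL n h g p) (renL n h g q)
  | For p q => For (renL n h g p) (renL n h g q)
  | Fimp p q => Fimp (renL n h g p) (renL n h g q)
  | Fall0 j p => Fall0 j (renL n h g p)
  | Fex0 j p => Fex0 j (renL n h g p)
  | FallV k' n' i' p => if isL n h k' n' i' then FallV k' n' i' p
                        else FallV k' n' i' (renL n h g p)
  | FexV k' n' i' p => if isL n h k' n' i' then FexV k' n' i' p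
                       else FexV k' n' i' (renL n h g p)
  | Fprov t q => Fprov (renT n h g t) (renL n h g q)
  end.
Fixpoint freefor (n h g : nat) (p : fm) : Prop :=
  match p with
  | Fbot | Feq _ _ _ => True
  | Fand p q | For p q | Fimp p q => freefor n h g p /\ freefor n h g q
  | Fall0 _ p | Fex0 _ p => freefor n h g p
  | FallV k' n' i' p | FexV k' n' i' p =>
      if isL n h k' n' i' then True
      else ((k' = KL /\ n' = n /\ i' = g) -> ~ freeV KL n h p) /\ freefor n h g p
  | Fprov _ q => freefor n h g q
  end.

Record env : Type := mkEnv {
  e0 : nat -> nat;
  eV : kind -> forall n : nat, nat -> R (S n) }.

Definition upd0 (rho : env) (i c : nat) : env :=
  mkEnv (fun j => if Nat.eqb i j then c else e0 rho j) (eV rho).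
Definition updV (rho : env) (k : kind) (n i : nat) (c : R (S n)) : env :=
  mkEnv (e0 rho)
    (fun k' n' i' =>
       match Nat.eq_dec n n' with
       | left e => if kind_eqb k k' && Nat.eqb i i'
                   then eq_rect n (fun m => R (S m)) c n' e
                   else eV rho k' n' i'
       | right _ => eV rho k' n' i'
       end).

Definition dom (k : kind) (n : nat) (c : R (S n)) : Prop :=
  match k with
  | KF => inA (S n) c
  | KA => inB n c
  | KL => inL n c
  end.
Definition envOK (s : nat) (rho : env) : Prop :=
  forall k n i, S n <= s -> dom k n (eV rho k n i).

(* value of a term at node alpha of M = d_(s-1) (None = undefined) *)
Fixpoint ev (s : nat) (alpha : Tup (pred s)) (rho : env) {n : nat} (t : tm n)
  : option (R n) :=
  match t in tm n return option (R n) with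
  | tvar0 i => Some (e0 rho i : R 0)
  | tzero => Some (0 : R 0)
  | tS t => match ev s alpha rho t with Some a => Some (S a : R 0) | None => None end
  | tplus t u =>
      match ev s alpha rho t, ev s alpha rho u with
      | Some a, Some b => Some ((a + b : nat) : R 0) | _, _ => None end
  | tmult t u =>
      match ev s alpha rho t, ev s alpha rho u with
      | Some a, Some b => Some ((a * b : nat) : R 0) | _, _ => None end
  | tV k n i => Some (eV rho k n i)
  | tK n => Some (Kc n)
  | tN n Z => option_map (Sfun (S n)) (ev s alpha rho Z)
  | tAp n Z t =>
      match ev s alpha rho Z with
      | Some f =>
          match ev s alpha rho t with
          | Some m =>
              match trunc_opt (pred s) n alpha with
              | Some x => f x m
              | None => None
              end
          | None => None
          end
      | None => None
      end
  end.

Fixpoint force (s : nat) (alpha : Tup (pred s)) (rho : env) (p : fm) {struct p} : Prop :=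
  match p with
  | Fbot => False
  | Feq n t u =>
      forall P, isPath (pred s) (validD (pred s)) P -> P alpha ->
        exists beta, P beta /\
          exists v, ev s beta rho t = Some v /\ ev s beta rho u = Some v
  | Fprov t q =>
      forall P, isPath (pred s) (validD (pred s)) P -> P alpha ->
        exists beta, P beta /\
          exists m, ev s beta rho t = Some (m : R 0) /\
            exists gamma, validD (pred s) gamma /\ leT (pred s) beta gamma /\
              lh (pred s) gamma = m /\ force s gamma rho q
  | Fand p q => force s alpha rho p /\ force s alpha rho q
  | For p q =>
      forall P, isPath (pred s) (validD (pred s)) P -> P alpha ->
        exists beta, P beta /\ (force s beta rho p \/ force s beta rho q)
  | Fimp p q =>
      forall beta, validD (pred s) beta -> leT (pred s) beta alpha ->
        force s beta rho p -> force s beta rho q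
  | Fall0 i p => forall c : nat, force s alpha (upd0 rho i c) p
  | Fex0 i p =>
      forall P, isPath (pred s) (validD (pred s)) P -> P alpha ->
        exists beta, P beta /\ exists c : nat, force s beta (upd0 rho i c) p
  | FallV k n i p => forall c, dom k n c -> force s alpha (updV rho k n i c) p
  | FexV k n i p =>
      forall P, isPath (pred s) (validD (pred s)) P -> P alpha ->
        exists beta, P beta /\ exists c, dom k n c /\ force s beta (updV rho k n i c) p
  end.

Definition root_forces (s : nat) (rho : env) (p : fm) : Prop :=
  force s (rootT (pred s)) rho p.

(* Bounded quantifiers as abbreviations:
   (forall y <= x) p := forall y ((exists z, y + z = x) -> p)
   (forall y <  x) p := forall y ((exists z, S (y + z) = x) -> p)
   with z := S (x + y), distinct from x and y. *)
Definition Fall_le (y x : nat) (p : fm) : fm :=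
  Fall0 y (Fimp (Fex0 (S (x + y)) (Feq 0 (tplus (tvar0 y) (tvar0 (S (x + y)))) (tvar0 x))) p).
Definition Fall_lt (y x : nat) (p : fm) : fm :=
  Fall0 y (Fimp (Fex0 (S (x + y))
                   (Feq 0 (tS (tplus (tvar0 y) (tvar0 (S (x + y))))) (tvar0 x))) p).

Definition LL1 (n x y F f : nat) : fm :=
  FexV KL n f (Fall_le y x (Feq n (tAp n (tV KL n f) (tvar0 y)) (tAp n (tV KF n F) (tvar0 y)))).

Definition LL2 (n f g : nat) : fm :=
  For (Feq (S n) (tV KL n f) (tV KL n g)) (Fneg (Feq (S n) (tV KL n f) (tV KL n g))).

Definition LL3 (n h g x y : nat) (p : fm) : fm :=
  Fimp p (Fex0 x (FallV KL n g
    (Fimp (Fall_lt y x (Feq n (tAp n (tV KL n g) (tvar0 y)) (tAp n (tV KL n h) (tvar0 y))))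
          (renL n h g p)))).

(* (LL1): along any path, the values of [F] at the arguments [y <= x] are all defined
   at some node [b]; transposing, for each such [y], the [y]-th entry of the level-[n]
   sequence of [b] with that value gives a lawless functional which agrees with [F] below [b].
   (LL2): whether two lawless functionals are equal does not depend on the node.
   (LL3): if [phi(H)] is forced at [alpha] and the lawless [G] agrees with [H] on the first
   [lh alpha] arguments, the permutations [xi_H(u)^-1 o xi_G(u)] of the entries of level-[n]
   sequences induce an automorphism of the Beth model that fixes [alpha], the lawlike
   functionals and all functionals of lower type, and carries [H] to [G]; forcing is invariant
   under such automorphisms, so [phi(G)] is forced below [alpha]. *)

From Stdlib Require Import Arith List Lia ClassicalEpsilon Classical.
From Stdlib Require Import FunctionalExtensionality PropExtensionality.
Import ListNotations.

(** * Nodes of the Beth tree *)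

Lemma prefix_refl {A} (l : list A) : prefix l l.
Proof. exists []. now rewrite app_nil_r. Qed.

Lemma prefix_trans {A} (a b c : list A) : prefix a b -> prefix b c -> prefix a c.
Proof. intros [l1 ->] [l2 ->]. exists (l1 ++ l2). now rewrite app_assoc. Qed.

Lemma prefix_length {A} (a b : list A) : prefix a b -> length a <= length b.
Proof. intros [l ->]. rewrite length_app. lia. Qed.

Lemma prefix_firstn {A} (a b : list A) : prefix a b -> a = firstn (length a) b.
Proof.
  intros [l ->]. rewrite firstn_app, firstn_all, Nat.sub_diag. simpl. now rewrite app_nil_r.
Qed.

Lemma firstn_prefix {A} j (b : list A) : prefix (firstn j b) b.
Proof. exists (skipn j b). now rewrite firstn_skipn. Qed.

Lemma prefix_nil {A} (b : list A) : prefix [] b.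
Proof. now exists b. Qed.

Lemma prefix_app {A} (b c : list A) : prefix b (b ++ c).
Proof. now exists c. Qed.

Lemma nth_prefix {A} (l1 l2 : list A) m d :
  prefix l1 l2 -> m < length l1 -> nth m l2 d = nth m l1 d.
Proof. intros [l ->] H. now rewrite app_nth1. Qed.

Lemma leT_refl k (x : Tup k) : leT k x x.
Proof. induction k; simpl. apply prefix_refl. split. apply IHk. apply prefix_refl. Qed.

Lemma leT_trans k (x y z : Tup k) : leT k x y -> leT k y z -> leT k x z.
Proof.
  induction k; simpl. intros; eapply prefix_trans; eauto.
  intros [] []; split. eapply IHk; eauto. eapply prefix_trans; eauto.
Qed.

Lemma leT_root k (x : Tup k) : leT k x (rootT k).
Proof. induction k; simpl. apply prefix_nil. split. apply IHk. apply prefix_nil. Qed.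

Lemma leT_lh k (x y : Tup k) : leT k x y -> lh k y <= lh k x.
Proof. destruct k; simpl; intros H. apply prefix_length, H. apply prefix_length, H. Qed.

Lemma leT_lastc k (x y : Tup k) : leT k x y -> prefix (lastc k y) (lastc k x).
Proof. destruct k; simpl. auto. intros [_ H]. exact H. Qed.

Lemma valid_lastc k (x : Tup k) : validD k x -> Forall (inA k) (lastc k x).
Proof. destruct k. intros _. apply Forall_forall. intros; exact I. intros [_ [H _]]. exact H. Qed.

Lemma lh_root k : lh k (rootT k) = 0.
Proof. destruct k; reflexivity. Qed.

Lemma valid_root k : validD k (rootT k).
Proof.
  induction k. exact I. split. exact IHk. split. constructor.
  change (0 = lh k (rootT k)). now rewrite lh_root.
Qed.

Fixpoint trim (k : nat) : nat -> Tup k -> Tup k :=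
  match k return nat -> Tup k -> Tup k with
  | 0 => fun j (x : Tup 0) => (firstn j (x : list nat) : Tup 0)
  | S k' => fun j (x : Tup (S k')) => ((trim k' j (fst x), firstn j (snd x)) : Tup (S k'))
  end.

Lemma leT_trim k j (x : Tup k) : leT k x (trim k j x).
Proof. induction k; simpl. apply firstn_prefix. split. apply IHk. apply firstn_prefix. Qed.

Lemma lh_trim k j (x : Tup k) : lh k (trim k j x) = min j (lh k x).
Proof. destruct k; simpl; unfold lh; simpl; apply length_firstn. Qed.

Lemma valid_trim k j (x : Tup k) : validD k x -> validD k (trim k j x).
Proof.
  induction k; simpl. auto.
  intros [H1 [H2 H3]]. split. apply IHk, H1. split.
  - rewrite <- (firstn_skipn j (snd x)) in H2. apply Forall_app in H2. apply H2.
  - change (length (firstn j (snd x)) = lh k (trim k j (fst x))).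
    rewrite length_firstn, lh_trim. change (length (snd x) = lh k (fst x)) in H3.
    now rewrite H3.
Qed.

Lemma trim_lh k (x : Tup k) : validD k x -> trim k (lh k x) x = x.
Proof.
  induction k; simpl. intros _. apply firstn_all.
  intros [H1 [_ H3]]. destruct x as [x1 x2]. simpl in *.
  change (length x2 = lh k x1) in H3. change (lh (S k) (x1, x2)) with (length x2).
  rewrite firstn_all. f_equal. rewrite H3. apply IHk, H1.
Qed.

Lemma leT_trim_eq k (x y : Tup k) : validD k y -> leT k x y -> y = trim k (lh k y) x.
Proof.
  induction k; simpl. intros _ H. apply prefix_firstn, H.
  intros [H1 [_ H3]] [L1 L2]. destruct y as [y1 y2]. simpl in *. f_equal.
  - change (length y2 = lh k y1) in H3. change (lh (S k) (y1, y2)) with (length y2).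
    rewrite H3. apply IHk; auto.
  - change (lh (S k) (y1, y2)) with (length y2). apply prefix_firstn, L2.
Qed.

Lemma trim_trim k i j (x : Tup k) : trim k i (trim k j x) = trim k (min i j) x.
Proof. induction k; simpl. now rewrite firstn_firstn. now rewrite IHk, firstn_firstn. Qed.

Lemma trim_comparable k a b (x : Tup k) :
  leT k (trim k a x) (trim k b x) \/ leT k (trim k b x) (trim k a x).
Proof.
  destruct (le_ge_dec a b); [right|left].
  - replace (trim k a x) with (trim k a (trim k b x)) by (rewrite trim_trim; f_equal; lia).
    apply leT_trim.
  - replace (trim k b x) with (trim k b (trim k a x)) by (rewrite trim_trim; f_equal; lia).
    apply leT_trim.
Qed.

Lemma initial_segments_comparable k (x y1 y2 : Tup k) : validD k y1 -> validD k y2 ->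
  leT k x y1 -> leT k x y2 -> leT k y1 y2 \/ leT k y2 y1.
Proof.
  intros V1 V2 L1 L2. rewrite (leT_trim_eq k x y1 V1 L1), (leT_trim_eq k x y2 V2 L2).
  apply trim_comparable.
Qed.

Lemma comparable_lh_eq k (x y : Tup k) : validD k x -> validD k y ->
  leT k x y \/ leT k y x -> lh k x = lh k y -> x = y.
Proof.
  assert (H : forall x y, validD k x -> validD k y -> leT k x y -> lh k x = lh k y -> x = y).
  { intros a b Va Vb L E. rewrite (leT_trim_eq k a b Vb L), <- E. symmetry. now apply trim_lh. }
  intros Vx Vy [L|L] E. now apply H. symmetry. now apply H.
Qed.

Lemma nth_lastc_comparable k (x y : Tup k) u d : leT k x y \/ leT k y x ->
  u < lh k x -> u < lh k y -> nth u (lastc k x) d = nth u (lastc k y) d.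
Proof.
  intros [L|L] Hx Hy.
  - apply nth_prefix. now apply leT_lastc. exact Hy.
  - symmetry. apply nth_prefix. now apply leT_lastc. exact Hx.
Qed.

(** * Paths *)

Definition K_val (k : nat) : R k :=
  match k return R k with 0 => (0 : R 0) | S k' => Kc k' end.

Lemma Kc_eq k (x : Tup k) m :
  Kc k x m = if excluded_middle_informative (validD k x) then Some (K_val k) else None.
Proof. destruct k; reflexivity. Qed.

Lemma path_valid k P x : isPath k (validD k) P -> P x -> validD k x.
Proof. intros [[C _] _]. apply C. Qed.

Lemma path_chain k P x y : isPath k (validD k) P -> P x -> P y -> leT k x y \/ leT k y x.
Proof. intros [[_ C] _]. apply C. Qed.

Lemma path_nonempty k P : isPath k (validD k) P -> exists x, P x.
Proof.
  intros [C M]. apply NNPP. intros N.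
  assert (HQ : chain k (validD k) (fun z => z = rootT k)).
  { split. intros x ->. apply valid_root. intros x y -> ->. left. apply leT_refl. }
  apply N. exists (rootT k). apply (M _ HQ); [|reflexivity].
  intros x Hx. exfalso. apply N. now exists x.
Qed.

Lemma path_initial k P x y :
  isPath k (validD k) P -> P x -> validD k y -> leT k x y -> P y.
Proof.
  intros HP Px Vy L. destruct HP as [[C1 C2] M].
  assert (HQ : chain k (validD k) (fun z => P z \/ z = y)).
  { split. intros z [Hz| ->]; auto.
    intros a b [Ha| ->] [Hb| ->]; auto.
    - destruct (C2 a x Ha Px) as [L1|L1].
      + left. eapply leT_trans; eauto.
      + eapply initial_segments_comparable; eauto.
    - destruct (C2 b x Hb Px) as [L1|L1].
      + right. eapply leT_trans; eauto.
      + eapply initial_segments_comparable; eauto.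
    - left. apply leT_refl. }
  apply (M _ HQ); auto.
Qed.

Lemma path_min k P x y : isPath k (validD k) P -> P x -> P y ->
  exists z, P z /\ leT k z x /\ leT k z y.
Proof.
  intros HP Px Py. destruct (path_chain _ _ _ _ HP Px Py) as [L|L].
  - exists x. split; auto. split; auto. apply leT_refl.
  - exists y. split; auto. split; auto. apply leT_refl.
Qed.

Lemma inA_K_val k : inA k (K_val k).
Proof.
  induction k. exact I.
  change (inA (S k) (Kc k)). split; [|split].
  - intros x m v. rewrite Kc_eq. destruct excluded_middle_informative; [|discriminate].
    intros H. injection H as <-. auto.
  - intros x y Vx Vy L m v. rewrite !Kc_eq.
    destruct (excluded_middle_informative (validD k x)); [|discriminate].
    destruct (excluded_middle_informative (validD k y)); [auto|contradiction].
  - intros P HP m. destruct (path_nonempty k P HP) as [x Hx]. exists x. split; auto.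
    rewrite Kc_eq. destruct excluded_middle_informative. discriminate.
    exfalso. apply n. eapply path_valid; eauto.
Qed.

Fixpoint extend (k : nat) : Tup k -> Tup k :=
  match k return Tup k -> Tup k with
  | 0 => fun (x : Tup 0) => ((x : list nat) ++ [0] : Tup 0)
  | S k' => fun (x : Tup (S k')) => ((extend k' (fst x), snd x ++ [Kc k']) : Tup (S k'))
  end.

Lemma leT_extend k (x : Tup k) : leT k (extend k x) x.
Proof. induction k; simpl. apply prefix_app. split. apply IHk. apply prefix_app. Qed.

Lemma lh_extend k (x : Tup k) : lh k (extend k x) = S (lh k x).
Proof.
  destruct k.
  - change (length ((x : list nat) ++ [0]) = S (length (x : list nat))).
    rewrite length_app; simpl; lia.
  - change (length (snd x ++ [Kc k]) = S (length (snd x))). rewrite length_app; simpl; lia.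
Qed.

Lemma valid_extend k (x : Tup k) : validD k x -> validD k (extend k x).
Proof.
  induction k. auto.
  intros [H1 [H2 H3]]. split. apply IHk, H1. split.
  - apply Forall_app. split. exact H2. constructor. apply (inA_K_val (S k)). constructor.
  - change (length (snd x ++ [Kc k]) = lh k (extend k (fst x))).
    rewrite length_app, lh_extend. change (length (snd x) = lh k (fst x)) in H3. simpl. lia.
Qed.

Lemma path_unbounded k P : isPath k (validD k) P -> forall m, exists x, P x /\ m <= lh k x.
Proof.
  intros HP m. induction m.
  - destruct (path_nonempty k P HP) as [x Hx]. exists x. split; auto. lia.
  - destruct IHm as [x [Px Lx]].
    destruct (classic (exists y, P y /\ lh k x < lh k y)) as [[y [Py Ly]]|N].
    { exists y. split; auto. lia. }
    exists (extend k x). split; [|rewrite lh_extend; lia].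
    destruct HP as [[C1 C2] M].
    assert (Below : forall a, P a -> leT k (extend k x) a).
    { intros a Pa. destruct (C2 a x Pa Px) as [L|L].
      - assert (lh k a <= lh k x) by (apply NNPP; intro; apply N; exists a; split; auto; lia).
        pose proof (leT_lh _ _ _ L).
        assert (a = x) by (apply comparable_lh_eq; auto; lia).
        subst. apply leT_extend.
      - eapply leT_trans. apply leT_extend. exact L. }
    assert (HQ : chain k (validD k) (fun z => P z \/ z = extend k x)).
    { split. intros z [Hz| ->]; auto. apply valid_extend; auto.
      intros a b [Ha| ->] [Hb| ->]; auto. left. apply leT_refl. }
    apply (M _ HQ); auto.
Qed.

Lemma path_length k P : isPath k (validD k) P -> forall m, exists x, P x /\ lh k x = m.
Proof.
  intros HP m. destruct (path_unbounded k P HP m) as [x [Px L]].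
  exists (trim k m x). split.
  - eapply path_initial; eauto. apply valid_trim. eapply path_valid; eauto. apply leT_trim.
  - rewrite lh_trim. lia.
Qed.

Lemma path_through k b : validD k b -> exists P, isPath k (validD k) P /\ P b.
Proof.
  intros Vb.
  set (P := fun z => validD k z /\ exists j, leT k (Nat.iter j (extend k) b) z).
  assert (Vi : forall j, validD k (Nat.iter j (extend k) b)).
  { induction j. exact Vb. simpl. now apply valid_extend. }
  assert (Li : forall j, lh k (Nat.iter j (extend k) b) = j + lh k b).
  { induction j. reflexivity. simpl. rewrite lh_extend. lia. }
  assert (Mi : forall i j, i <= j -> leT k (Nat.iter j (extend k) b) (Nat.iter i (extend k) b)).
  { intros i j H. induction H. apply leT_refl.
    eapply leT_trans; [|exact IHle]. simpl. apply leT_extend. }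
  assert (CP : chain k (validD k) P).
  { split. intros x [V _]; auto.
    intros x y [Vx [i Li']] [Vy [j Lj']].
    destruct (le_ge_dec i j).
    - apply (initial_segments_comparable k (Nat.iter j (extend k) b)); auto.
      eapply leT_trans; [apply Mi|]; eauto.
    - apply (initial_segments_comparable k (Nat.iter i (extend k) b)); auto.
      eapply leT_trans; [apply Mi|]; eauto. }
  exists P. split; [split; auto|].
  - intros Q [QC1 QC2] PQ z Qz. assert (Vz : validD k z) by (apply QC1, Qz).
    split. exact Vz. exists (lh k z).
    assert (Pw : P (Nat.iter (lh k z) (extend k) b))
      by (split; [apply Vi| exists (lh k z); apply leT_refl]).
    destruct (QC2 _ _ Qz (PQ _ Pw)) as [L|L]; [|exact L].
    pose proof (leT_lh _ _ _ L) as Hl. rewrite Li in Hl.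
    assert (E : z = Nat.iter (lh k z) (extend k) b)
      by (apply comparable_lh_eq; auto; rewrite Li; lia).
    rewrite E at 2. apply leT_refl.
  - split. auto. exists 0. apply leT_refl.
Qed.

Definition barred (k : nat) (alpha : Tup k) (Q : Tup k -> Prop) : Prop :=
  forall P, isPath k (validD k) P -> P alpha -> exists beta, P beta /\ Q beta.

Lemma barred_here k alpha (Q : Tup k -> Prop) : Q alpha -> barred k alpha Q.
Proof. intros H P _ Pa. eauto. Qed.

Lemma barred_mono k alpha gamma (Q : Tup k -> Prop) :
  validD k alpha -> leT k gamma alpha -> barred k alpha Q -> barred k gamma Q.
Proof. intros Va L B P HP Pg. apply B; auto. eapply path_initial; eauto. Qed.

Lemma barred_witness k alpha (Q : Tup k -> Prop) : validD k alpha -> barred k alpha Q ->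
  exists beta, validD k beta /\ (leT k beta alpha \/ leT k alpha beta) /\ Q beta.
Proof.
  intros Va B. destruct (path_through k alpha Va) as [P [HP Pa]].
  destruct (B P HP Pa) as [beta [Pb Qb]]. exists beta.
  split; [eapply path_valid; eauto|]. split; auto. eapply path_chain; eauto.
Qed.

Lemma valid_trunc d j (x : Tup (d + j)) : validD (d + j) x -> validD j (trunc d j x).
Proof. induction d. auto. intros [H _]. apply IHd, H. Qed.

Lemma leT_trunc d j (x y : Tup (d + j)) : leT (d + j) x y -> leT j (trunc d j x) (trunc d j y).
Proof. induction d. auto. intros [H _]. apply IHd, H. Qed.

Lemma lh_trunc d j (x : Tup (d + j)) : validD (d + j) x -> lh j (trunc d j x) = lh (d + j) x.
Proof. induction d. auto. intros H. simpl. rewrite IHd by apply H. symmetry. apply H. Qed.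

Lemma trunc_path d j P : isPath (d + j) (validD (d + j)) P ->
  isPath j (validD j) (fun y => exists x, P x /\ y = trunc d j x).
Proof.
  intros HP. split; [split|].
  - intros y [x [Px ->]]. apply valid_trunc. eapply path_valid; eauto.
  - intros y1 y2 [x1 [P1 ->]] [x2 [P2 ->]].
    destruct (path_chain _ _ _ _ HP P1 P2); [left|right]; now apply leT_trunc.
  - intros Q [QC1 QC2] PQ z Qz.
    destruct (path_length _ _ HP (lh j z)) as [x [Px Lx]].
    exists x. split; auto. apply (comparable_lh_eq j).
    + apply QC1, Qz.
    + apply valid_trunc. eapply path_valid; eauto.
    + apply QC2; auto. apply PQ. now exists x.
    + rewrite lh_trunc, Lx; [auto|]. eapply path_valid; eauto.
Qed.

Lemma trunc_opt_some k j (x : Tup k) : j <= k -> exists y, trunc_opt k j x = Some y.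
Proof. intros h. unfold trunc_opt. destruct (le_dec j k); [eauto|contradiction]. Qed.

Lemma trunc_opt_valid k j (x : Tup k) y :
  validD k x -> trunc_opt k j x = Some y -> validD j y /\ lh j y = lh k x.
Proof.
  unfold trunc_opt. destruct (le_dec j k) as [h|h]; [|discriminate].
  generalize (eq_sym (Nat.sub_add j k h)). generalize (k - j). intros d e. subst k. simpl.
  intros V E. injection E as <-. split. now apply valid_trunc. now apply lh_trunc.
Qed.

Lemma trunc_opt_leT k j (x x' : Tup k) y y' : leT k x x' ->
  trunc_opt k j x = Some y -> trunc_opt k j x' = Some y' -> leT j y y'.
Proof.
  unfold trunc_opt. destruct (le_dec j k) as [h|h]; [|discriminate].
  generalize (eq_sym (Nat.sub_add j k h)). generalize (k - j). intros d e. subst k. simpl.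
  intros L E E'. injection E as <-. injection E' as <-. now apply leT_trunc.
Qed.

Lemma trunc_opt_path k j P : j <= k -> isPath k (validD k) P ->
  isPath j (validD j) (fun y => exists x, P x /\ trunc_opt k j x = Some y).
Proof.
  intros h HP. unfold trunc_opt. destruct (le_dec j k); [|contradiction].
  generalize (eq_sym (Nat.sub_add j k l)). generalize (k - j). intros d e. subst k. simpl.
  replace (fun y => exists x, P x /\ Some (trunc d j x) = Some y)
    with (fun y => exists x, P x /\ y = trunc d j x).
  - now apply trunc_path.
  - apply functional_extensionality. intros y. apply propositional_extensionality.
    split; intros [x [Px H]]; exists x; split; congruence.
Qed.

(** * Environments and forcing *)

Lemma kind_eqb_refl k : kind_eqb k k = true.
Proof. destruct k; reflexivity. Qed.

Lemma kind_eqb_eq k k' : kind_eqb k k' = true -> k = k'.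
Proof. destruct k, k'; simpl; congruence. Qed.

Lemma updV_same rho k n i c : eV (updV rho k n i c) k n i = c.
Proof.
  unfold updV; simpl. destruct (Nat.eq_dec n n) as [e|e]; [|contradiction].
  rewrite kind_eqb_refl, Nat.eqb_refl. simpl. now rewrite (Eqdep_dec.UIP_refl_nat _ e).
Qed.

Lemma updV_other rho k n i c k' n' i' : ~ (k = k' /\ n = n' /\ i = i') ->
  eV (updV rho k n i c) k' n' i' = eV rho k' n' i'.
Proof.
  intros H. unfold updV; simpl. destruct (Nat.eq_dec n n') as [e|e]; auto.
  destruct (kind_eqb k k') eqn:E1; simpl; auto. destruct (Nat.eqb i i') eqn:E2; auto.
  exfalso. apply H. apply kind_eqb_eq in E1. apply Nat.eqb_eq in E2. auto.
Qed.

Lemma updV_shadow rho k n i c d k' n' i' :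
  eV (updV (updV rho k n i c) k n i d) k' n' i' = eV (updV rho k n i d) k' n' i'.
Proof.
  destruct (classic (k = k' /\ n = n' /\ i = i')) as [[<- [<- <-]]|N].
  - now rewrite !updV_same.
  - now rewrite !updV_other.
Qed.

Lemma updV_comm rho k n i c k' n' i' d : ~ (k = k' /\ n = n' /\ i = i') ->
  forall a m j, eV (updV (updV rho k n i c) k' n' i' d) a m j =
                eV (updV (updV rho k' n' i' d) k n i c) a m j.
Proof.
  intros N a m j.
  destruct (classic (k = a /\ n = m /\ i = j)) as [[<- [<- <-]]|N1].
  - rewrite updV_other, !updV_same by (intros [? [? ?]]; subst; tauto). reflexivity.
  - rewrite (updV_other _ k n i) by exact N1.
    destruct (classic (k' = a /\ n' = m /\ i' = j)) as [[<- [<- <-]]|N2].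
    + now rewrite !updV_same.
    + now rewrite !updV_other.
Qed.

Lemma upd0_same rho i c : e0 (upd0 rho i c) i = c.
Proof. unfold upd0; simpl. now rewrite Nat.eqb_refl. Qed.

Lemma upd0_other rho i c j : i <> j -> e0 (upd0 rho i c) j = e0 rho j.
Proof.
  intros H. unfold upd0; simpl. destruct (Nat.eqb i j) eqn:E; auto.
  apply Nat.eqb_eq in E. contradiction.
Qed.

Lemma upd0_eV rho i c : eV (upd0 rho i c) = eV rho.
Proof. reflexivity. Qed.

Lemma ev_agree s b rho1 rho2 n (t : tm n) :
  (forall i, tm_has0 i t -> e0 rho1 i = e0 rho2 i) ->
  (forall k m i, tm_hasV k m i t -> eV rho1 k m i = eV rho2 k m i) ->
  ev s b rho1 t = ev s b rho2 t.
Proof.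
  induction t; simpl; intros H0 HV; try reflexivity.
  - now rewrite H0.
  - now rewrite IHt.
  - rewrite IHt1, IHt2; auto.
  - rewrite IHt1, IHt2; auto.
  - now rewrite HV.
  - now rewrite IHt.
  - rewrite IHt1, IHt2; auto.
Qed.

Definition agree (p : fm) (rho1 rho2 : env) : Prop :=
  (forall i, free0 i p -> e0 rho1 i = e0 rho2 i) /\
  (forall k n i, freeV k n i p -> eV rho1 k n i = eV rho2 k n i).

Lemma agree_upd0 i p rho1 rho2 c :
  agree (Fall0 i p) rho1 rho2 -> agree p (upd0 rho1 i c) (upd0 rho2 i c).
Proof.
  intros [A0 AV]. split; [|exact AV].
  intros j Hj. destruct (Nat.eq_dec i j) as [<-|N].
  - now rewrite !upd0_same.
  - rewrite !upd0_other by exact N. apply A0. now split.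
Qed.

Lemma agree_updV k n i p rho1 rho2 c :
  agree (FallV k n i p) rho1 rho2 -> agree p (updV rho1 k n i c) (updV rho2 k n i c).
Proof.
  intros [A0 AV]. split; [exact A0|].
  intros k' n' i' Hf. destruct (classic (k = k' /\ n = n' /\ i = i')) as [[<- [<- <-]]|N].
  - now rewrite !updV_same.
  - rewrite !updV_other by exact N. apply AV. split; [|exact Hf].
    intros [-> [-> ->]]. now apply N.
Qed.

Lemma force_agree s p : forall b rho1 rho2, agree p rho1 rho2 ->
  (force s b rho1 p <-> force s b rho2 p).
Proof.
  induction p; intros b rho1 rho2 A; pose proof A as [A0 AV]; simpl in A0, AV; simpl.
  - tauto.
  - setoid_rewrite (ev_agree s _ rho1 rho2 n t); auto.
    setoid_rewrite (ev_agree s _ rho1 rho2 n u); auto. tauto.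
  - rewrite (IHp1 b rho1 rho2), (IHp2 b rho1 rho2); [tauto|split; auto..].
  - setoid_rewrite (IHp1 _ rho1 rho2); [|split; auto..].
    setoid_rewrite (IHp2 _ rho1 rho2); [tauto|split; auto..].
  - setoid_rewrite (IHp1 _ rho1 rho2); [|split; auto..].
    setoid_rewrite (IHp2 _ rho1 rho2); [tauto|split; auto..].
  - setoid_rewrite (IHp b _ _ (agree_upd0 i p rho1 rho2 _ A)). tauto.
  - setoid_rewrite (fun b c => IHp b _ _ (agree_upd0 i p rho1 rho2 c A)). tauto.
  - setoid_rewrite (IHp b _ _ (agree_updV k n i p rho1 rho2 _ A)). tauto.
  - setoid_rewrite (fun b c => IHp b _ _ (agree_updV k n i p rho1 rho2 c A)). tauto.
  - setoid_rewrite (ev_agree s _ rho1 rho2 0 t); auto.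
    setoid_rewrite (IHp _ rho1 rho2); [tauto|split; auto].
Qed.

Lemma force_ext s p b rho1 rho2 : (forall i, e0 rho1 i = e0 rho2 i) ->
  (forall k m i, eV rho1 k m i = eV rho2 k m i) -> (force s b rho1 p <-> force s b rho2 p).
Proof. intros H0 HV. apply force_agree. split; auto. Qed.

Lemma force_mono s p : forall b rho g, validD (pred s) b -> leT (pred s) g b ->
  force s b rho p -> force s g rho p.
Proof.
  induction p; intros b rho g Vb L; simpl; auto;
    try (apply barred_mono with (alpha := b); assumption).
  - intros [H1 H2]. split; [apply (IHp1 b)|apply (IHp2 b)]; auto.
  - intros H b' V' L'. apply H; auto. eapply leT_trans; eauto.
  - intros H c. apply (IHp b); auto.
  - intros H c D. apply (IHp b); auto.
Qed.

Lemma isL_true n h k m i : isL n h k m i = true -> k = KL /\ m = n /\ i = h.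
Proof.
  unfold isL. intros H. apply andb_prop in H as [H H3]. apply andb_prop in H as [H1 H2].
  apply kind_eqb_eq in H1. apply Nat.eqb_eq in H2. apply Nat.eqb_eq in H3. auto.
Qed.

Lemma isL_false n h k m i : isL n h k m i = false -> ~ (KL = k /\ n = m /\ h = i).
Proof. unfold isL. intros H [<- [<- <-]]. now rewrite kind_eqb_refl, !Nat.eqb_refl in H. Qed.

Lemma ev_renT s b rho n h g m (t : tm m) :
  ev s b rho (renT n h g t) = ev s b (updV rho KL n h (eV rho KL n g)) t.
Proof.
  induction t; cbn [renT ev]; try reflexivity.
  - now rewrite IHt.
  - now rewrite IHt1, IHt2.
  - now rewrite IHt1, IHt2.
  - destruct (isL n h k n0 i) eqn:E.
    + destruct (isL_true _ _ _ _ _ E) as [-> [-> ->]]. cbn [ev]. now rewrite updV_same.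
    + cbn [ev]. rewrite updV_other; [reflexivity|]. now apply isL_false.
  - now rewrite IHt.
  - now rewrite IHt1, IHt2.
Qed.

Lemma force_updV_shadow s p b rho k n i c d :
  force s b (updV (updV rho k n i c) k n i d) p <-> force s b (updV rho k n i d) p.
Proof. apply force_ext; [reflexivity|]. apply updV_shadow. Qed.

(* Under a binder for [V] that is not [H_h], renaming commutes with binding [V]; if [V] is
   [G_g] itself, [freefor] guarantees that [H_h] does not occur, so the renaming is void. *)
Lemma force_rename_under_binder s n h g k m i p b rho c :
  isL n h k m i = false -> ((k = KL /\ m = n /\ i = g) -> ~ freeV KL n h p) ->
  force s b (updV (updV rho k m i c) KL n h (eV (updV rho k m i c) KL n g)) p <->
  force s b (updV (updV rho KL n h (eV rho KL n g)) k m i c) p.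
Proof.
  intros E F. pose proof (isL_false _ _ _ _ _ E) as NE.
  destruct (classic (k = KL /\ m = n /\ i = g)) as [[-> [-> ->]]|N].
  - apply force_agree. split; [reflexivity|]. intros k' m' i' Hf.
    destruct (classic (KL = k' /\ n = m' /\ h = i')) as [[<- [<- <-]]|N1];
      [exfalso; exact (F (conj eq_refl (conj eq_refl eq_refl)) Hf)|].
    rewrite (updV_other _ KL n h) by exact N1.
    destruct (classic (KL = k' /\ n = m' /\ g = i')) as [[<- [<- <-]]|N2].
    + now rewrite !updV_same.
    + now rewrite !updV_other.
  - rewrite (updV_other _ k m i) by (intros [? [? ?]]; apply N; auto).
    apply force_ext; [reflexivity|]. apply updV_comm.
    intros [? [? ?]]; apply NE; auto.
Qed.

Lemma force_renL s n h g p : freefor n h g p -> forall b rho,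
  force s b rho (renL n h g p) <-> force s b (updV rho KL n h (eV rho KL n g)) p.
Proof.
  induction p; intros FF b rho; simpl in FF; simpl renL.
  - simpl. tauto.
  - simpl. setoid_rewrite ev_renT. tauto.
  - simpl. rewrite IHp1, IHp2 by tauto. tauto.
  - simpl. setoid_rewrite IHp1; [|tauto]. setoid_rewrite IHp2; [tauto|tauto].
  - simpl. setoid_rewrite IHp1; [|tauto]. setoid_rewrite IHp2; [tauto|tauto].
  - simpl. setoid_rewrite IHp; auto. tauto.
  - simpl. setoid_rewrite IHp; auto. tauto.
  - destruct (isL n h k n0 i) eqn:E; simpl.
    + destruct (isL_true _ _ _ _ _ E) as [-> [-> ->]].
      setoid_rewrite force_updV_shadow. tauto.
    + destruct FF as [F1 F2]. setoid_rewrite IHp; [|exact F2].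
      setoid_rewrite force_rename_under_binder; [tauto|exact E|exact F1].
  - destruct (isL n h k n0 i) eqn:E; simpl.
    + destruct (isL_true _ _ _ _ _ E) as [-> [-> ->]].
      setoid_rewrite force_updV_shadow. tauto.
    + destruct FF as [F1 F2]. setoid_rewrite IHp; [|exact F2].
      setoid_rewrite force_rename_under_binder; [tauto|exact E|exact F1].
  - simpl. setoid_rewrite ev_renT. setoid_rewrite IHp; auto. tauto.
Qed.

Lemma force_renL_fresh s n h g x c p b rho Gv :
  freefor n h g p -> g <> h -> (forall i, freeV KL n i p -> i = h) -> ~ free0 x p ->
  force s b (updV rho KL n h Gv) p -> force s b (updV (upd0 rho x c) KL n g Gv) (renL n h g p).
Proof.
  intros FF hgh HL hx H. apply force_renL; [exact FF|]. rewrite updV_same.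
  apply (force_agree s p b (updV rho KL n h Gv)); [|exact H]. split.
  - intros i Hi. cbn [e0 updV]. rewrite upd0_other; congruence.
  - intros k m i Hf. destruct (classic (KL = k /\ n = m /\ h = i)) as [[<- [<- <-]]|N].
    + now rewrite !updV_same.
    + rewrite !updV_other by exact N.
      rewrite updV_other; [reflexivity|]. intros [<- [<- <-]]. now apply hgh, HL.
Qed.

(** * (LL2) *)

Lemma LL2_holds s n f g rho : root_forces s rho (LL2 n f g).
Proof.
  apply barred_here.
  destruct (classic (eV rho KL n f = eV rho KL n g)) as [E|N]; [left|right].
  - apply barred_here. exists (eV rho KL n g). simpl. now rewrite E.
  - intros b Vb _ H. destruct (barred_witness _ _ _ Vb H) as [b' [_ [_ [v [E1 E2]]]]].
    simpl in E1, E2. congruence.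
Qed.

(** * (LL1) *)

Lemma ev_Ap_var s b rho k n i j :
  ev s b rho (tAp n (tV k n i) (tvar0 j)) =
  match trunc_opt (pred s) n b with Some x => eV rho k n i x (e0 rho j) | None => None end.
Proof. reflexivity. Qed.

Lemma force_Fall_le s b rho x y p : x <> y ->
  (forall u beta, validD (pred s) beta -> leT (pred s) beta b -> u <= e0 rho x ->
     force s beta (upd0 rho y u) p) ->
  force s b rho (Fall_le y x p).
Proof.
  intros hxy H u beta Vbeta Lbeta Hle. apply H; auto.
  destruct (barred_witness _ _ _ Vbeta Hle) as [b1 [Vb1 [_ [z Hz]]]].
  destruct (barred_witness _ _ _ Vb1 Hz) as [b2 [_ [_ [v [E1 E2]]]]].
  cbn [ev] in E1, E2. rewrite <- E2 in E1.
  rewrite (upd0_other _ (S (x + y)) _ x), (upd0_other _ y _ x), (upd0_other _ (S (x + y)) _ y),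
    !upd0_same in E1 by lia.
  injection E1. lia.
Qed.

Lemma force_Fall_lt_elim s b rho x y p : x <> y -> validD (pred s) b ->
  force s b rho (Fall_lt y x p) -> forall u, u < e0 rho x -> force s b (upd0 rho y u) p.
Proof.
  intros hxy Vb H u Hu. apply (H u b Vb (leT_refl _ _)).
  apply barred_here. exists (e0 rho x - S u). apply barred_here.
  exists (e0 rho x). cbn [ev].
  rewrite (upd0_other _ (S (x + y)) _ x), (upd0_other _ y _ x), (upd0_other _ (S (x + y)) _ y),
    !upd0_same by lia.
  split; f_equal; lia.
Qed.

Lemma inA_mono_trunc k n (Fv : R (S n)) b1 b2 t1 t2 m v : inA (S n) Fv ->
  validD k b1 -> validD k b2 -> leT k b2 b1 ->
  trunc_opt k n b1 = Some t1 -> trunc_opt k n b2 = Some t2 -> Fv t1 m = Some v -> Fv t2 m = Some v.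
Proof.
  intros [_ [Hm _]] V1 V2 L E1 E2 H.
  destruct (trunc_opt_valid _ _ _ _ V1 E1), (trunc_opt_valid _ _ _ _ V2 E2).
  apply (Hm t1 t2); auto. eapply trunc_opt_leT; eauto.
Qed.

(* Completeness of [Fv], applied once for each argument below [N], yields a node of the path
   at which all these values are already defined. *)
Lemma path_defined_below k n (Fv : R (S n)) P : n <= k -> inA (S n) Fv ->
  isPath k (validD k) P -> forall N, exists b, P b /\ N <= lh k b /\
    forall m tb, m < N -> trunc_opt k n b = Some tb -> Fv tb m <> None.
Proof.
  intros hn HF HP. induction N.
  { destruct (path_nonempty _ _ HP) as [b Pb]. exists b. split; auto. split; [lia|intros; lia]. }
  destruct IHN as [b [Pb [Lb Hb]]].
  destruct (path_length _ _ HP (S N)) as [w [Pw Lw]].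
  destruct (proj2 (proj2 HF) _ (trunc_opt_path k n P hn HP) N) as [z [[xN [PxN Ez]] Dz]].
  destruct (path_min _ _ _ _ HP Pb Pw) as [b1 [Pb1 [L1 L1']]].
  destruct (path_min _ _ _ _ HP Pb1 PxN) as [b2 [Pb2 [L2 L2']]].
  assert (Vb2 : validD k b2) by (eapply path_valid; eauto).
  exists b2. split; auto. split.
  { pose proof (leT_lh _ _ _ (leT_trans _ _ _ _ L2 L1')). lia. }
  intros m tb Hm Eb.
  destruct (Nat.eq_dec m N) as [->|Hne].
  - destruct (Fv z N) as [v|] eqn:Ev; [|contradiction].
    rewrite (inA_mono_trunc k n Fv xN b2 z tb N v); auto; try discriminate.
    eapply path_valid; eauto.
  - destruct (trunc_opt_some k n b hn) as [tb0 Eb0].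
    specialize (Hb m tb0 ltac:(lia) Eb0). destruct (Fv tb0 m) as [v|] eqn:Ev; [|contradiction].
    rewrite (inA_mono_trunc k n Fv b b2 tb0 tb m v); auto; try discriminate.
    + eapply path_valid; eauto.
    + apply (leT_trans k b2 b1 b); auto.
Qed.

Definition swap {A} (a b v : A) : A :=
  if excluded_middle_informative (v = a) then b
  else if excluded_middle_informative (v = b) then a else v.

Lemma swap_a {A} (a b : A) : swap a b a = b.
Proof. unfold swap. destruct excluded_middle_informative; congruence. Qed.

Lemma swap_inv {A} (a b v : A) : swap a b (swap a b v) = v.
Proof. unfold swap. repeat (destruct excluded_middle_informative; subst; try congruence). Qed.

Lemma swap_pres {A} (Q : A -> Prop) a b v : Q a -> Q b -> Q v -> Q (swap a b v).
Proof. unfold swap. repeat destruct excluded_middle_informative; auto. Qed.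

Definition isBij {A} (Q : A -> Prop) (g : A -> A) : Prop :=
  (forall v, Q v -> Q (g v)) /\
  (forall v w, Q v -> Q w -> g v = g w -> v = w) /\
  (forall w, Q w -> exists v, Q v /\ g v = w).

Lemma isBij_inv {A} (Q : A -> Prop) g h : (forall v, Q v -> Q (g v)) ->
  (forall v, Q v -> Q (h v)) -> (forall v, h (g v) = v) -> (forall v, g (h v) = v) -> isBij Q g.
Proof.
  intros G H HG GH. split; [|split].
  - exact G.
  - intros v w _ _ E. rewrite <- (HG v), <- (HG w), E. reflexivity.
  - intros w Qw. exists (h w). split; auto.
Qed.

Lemma isBij_comp {A} (Q : A -> Prop) g h : isBij Q g -> isBij Q h -> isBij Q (fun v => g (h v)).
Proof.
  intros [G1 [G2 G3]] [H1 [H2 H3]]. split; [|split].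
  - auto.
  - intros v w Qv Qw E. apply H2; auto.
  - intros w Qw. destruct (G3 w Qw) as [v1 [Q1 E1]]. destruct (H3 v1 Q1) as [v2 [Q2 E2]].
    exists v2. split; auto. congruence.
Qed.

Lemma swap_bij {A} (Q : A -> Prop) a b : Q a -> Q b -> isBij Q (swap a b).
Proof.
  intros Ha Hb. apply isBij_inv with (h := swap a b).
  1, 2: intros; now apply swap_pres.
  all: intros; apply swap_inv.
Qed.

Definition nuL (n : nat) (xi : nat -> R n -> R n) : R (S n) :=
  fun (z : Tup n) m =>
    if excluded_middle_informative (validD n z /\ m < lh n z)
    then Some (xi m (nth m (lastc n z) (dflt n))) else None.

Lemma nuL_inL n xi : (forall m, isBij (inA n) (xi m)) -> inL n (nuL n xi).
Proof.
  intros H. exists xi. split; [exact H|].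
  intros x m. unfold nuL. destruct excluded_middle_informative; tauto.
Qed.

(* Transposing the [u]-th entry of [tb] with [v u] gives a lawless functional taking the
   prescribed values below [tb]. *)
Lemma lawless_through n (tb : Tup n) (v : nat -> R n) :
  validD n tb -> (forall u, inA n (v u)) ->
  exists c, inL n c /\
    forall z u, validD n z -> leT n z tb -> u < lh n tb -> c z u = Some (v u).
Proof.
  intros Vtb Hv.
  set (e := fun u => nth u (lastc n tb) (dflt n)).
  set (xi := fun u => if excluded_middle_informative (inA n (e u)) then swap (e u) (v u)
                      else fun w => w).
  exists (nuL n xi). split.
  - apply nuL_inL. intros u. unfold xi. destruct excluded_middle_informative.
    + now apply swap_bij.
    + apply isBij_inv with (h := fun w => w); auto.
  - intros z u Vz Lz Hu. pose proof (leT_lh _ _ _ Lz).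
    unfold nuL. destruct excluded_middle_informative as [_|N];
      [|exfalso; apply N; split; auto; lia].
    rewrite (nth_prefix (lastc n tb)); [|now apply leT_lastc|exact Hu].
    f_equal. unfold xi. fold (e u). destruct excluded_middle_informative as [_|N].
    + apply swap_a.
    + exfalso. apply N. apply Forall_nth; [now apply valid_lastc|exact Hu].
Qed.

Lemma LL1_holds s n x y F f rho : S n <= s -> x <> y -> envOK s rho ->
  root_forces s rho (LL1 n x y F f).
Proof.
  intros hn hxy ok P HP _.
  set (k := pred s) in *. assert (hnk : n <= k) by (unfold k; lia).
  set (Fv := eV rho KF n F). assert (HF : inA (S n) Fv) by apply (ok KF n F hn).
  destruct (path_defined_below k n Fv P hnk HF HP (S (e0 rho x))) as [b [Pb [Lb Hb]]].
  assert (Vb : validD k b) by (eapply path_valid; eauto).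
  destruct (trunc_opt_some k n b hnk) as [tb Etb].
  destruct (trunc_opt_valid _ _ _ _ Vb Etb) as [Vtb Ltb].
  set (v := fun u => match Fv tb u with Some w => w | None => K_val n end).
  assert (Hv : forall u, inA n (v u)).
  { intros u. unfold v. destruct (Fv tb u) eqn:E; [|apply inA_K_val]. apply (proj1 HF _ _ _ E). }
  destruct (lawless_through n tb v Vtb Hv) as [c [Lc Hc]].
  exists b. split; auto. exists c. split; [exact Lc|].
  apply force_Fall_le; [exact hxy|]. intros u be Vbe Lbe Hu. cbn [e0 updV] in Hu.
  apply barred_here.
  destruct (trunc_opt_some k n be hnk) as [tbe Etbe].
  destruct (trunc_opt_valid _ _ _ _ Vbe Etbe) as [Vtbe Ltbe].
  assert (Ev : Fv tb u = Some (v u)).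
  { unfold v. destruct (Fv tb u) eqn:E; [reflexivity|]. exfalso. apply (Hb u tb); auto. lia. }
  exists (v u). rewrite !ev_Ap_var. fold k. rewrite Etbe, !upd0_eV.
  rewrite upd0_same, updV_same, updV_other by (intros [H _]; discriminate). split.
  - apply Hc; [exact Vtbe|eapply trunc_opt_leT; eauto|lia].
  - apply (inA_mono_trunc k n Fv b be tb tbe u); auto.
Qed.

(** * Automorphisms of the model induced by permutations of a level *)

Fixpoint mapi {A} (f : nat -> A -> A) (i : nat) (l : list A) : list A :=
  match l with [] => [] | a :: l' => f i a :: mapi f (S i) l' end.

Lemma mapi_length {A} (f : nat -> A -> A) i l : length (mapi f i l) = length l.
Proof. revert i; induction l; simpl; auto. Qed.

Lemma mapi_app {A} (f : nat -> A -> A) i l1 l2 :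
  mapi f i (l1 ++ l2) = mapi f i l1 ++ mapi f (i + length l1) l2.
Proof.
  revert i; induction l1; intros; simpl. now rewrite Nat.add_0_r.
  rewrite IHl1. do 3 f_equal. lia.
Qed.

Lemma mapi_prefix {A} (f : nat -> A -> A) l1 l2 :
  prefix l1 l2 -> prefix (mapi f 0 l1) (mapi f 0 l2).
Proof. intros [l ->]. rewrite mapi_app. apply prefix_app. Qed.

Lemma mapi_cancel {A} (f g : nat -> A -> A) i l :
  (forall j v, g j (f j v) = v) -> mapi g i (mapi f i l) = l.
Proof. intros H. revert i; induction l; intros; simpl; auto. now rewrite H, IHl. Qed.

Lemma mapi_id {A} (f : nat -> A -> A) i l : (forall j v, f j v = v) -> mapi f i l = l.
Proof. intros H. revert i; induction l; intros; simpl; auto. now rewrite H, IHl. Qed.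

Lemma mapi_nth {A} (f : nat -> A -> A) i l d m :
  m < length l -> nth m (mapi f i l) d = f (i + m) (nth m l d).
Proof.
  revert i m; induction l; intros i m H; simpl in *. lia. destruct m. now rewrite Nat.add_0_r.
  rewrite IHl by lia. f_equal. lia.
Qed.

Lemma mapi_Forall {A} (Q : A -> Prop) (f : nat -> A -> A) i l :
  (forall j v, Q v -> Q (f j v)) -> Forall Q l -> Forall Q (mapi f i l).
Proof. intros H F. revert i; induction F; intros; simpl; constructor; auto. Qed.

Lemma mapi_fix {A} (f : nat -> A -> A) i l d :
  (forall m, m < length l -> f (i + m) (nth m l d) = nth m l d) -> mapi f i l = l.
Proof.
  revert i; induction l; intros i H; simpl; auto. f_equal.
  - specialize (H 0). rewrite Nat.add_0_r in H. apply H. simpl; lia.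
  - apply IHl. intros m Hm. replace (S i + m) with (i + S m) by lia. apply (H (S m)). simpl; lia.
Qed.

Definition level_perm (n : nat) (pi : nat -> R n -> R n) (k : nat) : nat -> R k -> R k :=
  match Nat.eq_dec n k with
  | left e => eq_rect n (fun j => nat -> R j -> R j) pi k e
  | right _ => fun _ v => v
  end.

Lemma level_perm_same n pi : level_perm n pi n = pi.
Proof.
  unfold level_perm. destruct (Nat.eq_dec n n) as [e|e]; [|contradiction].
  now rewrite (Eqdep_dec.UIP_refl_nat _ e).
Qed.

Lemma level_perm_other n pi k : n <> k -> level_perm n pi k = fun _ v => v.
Proof. unfold level_perm. destruct (Nat.eq_dec n k); [contradiction|reflexivity]. Qed.

Lemma level_perm_cancel n pi pi' k : (forall i v, pi' i (pi i v) = v) ->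
  forall i v, level_perm n pi' k i (level_perm n pi k i v) = v.
Proof. intros H. unfold level_perm. destruct (Nat.eq_dec n k); [subst; simpl; auto|auto]. Qed.

Lemma level_perm_inA n pi k : (forall i v, inA n v -> inA n (pi i v)) ->
  forall i v, inA k v -> inA k (level_perm n pi k i v).
Proof. intros H. unfold level_perm. destruct (Nat.eq_dec n k); [subst; simpl; auto|auto]. Qed.

Fixpoint node_perm (n : nat) (pi : nat -> R n -> R n) (k : nat) : Tup k -> Tup k :=
  match k return Tup k -> Tup k with
  | 0 => fun (x : Tup 0) => (mapi (level_perm n pi 0) 0 (x : list nat) : Tup 0)
  | S k' => fun (x : Tup (S k')) =>
      ((node_perm n pi k' (fst x), mapi (level_perm n pi (S k')) 0 (snd x)) : Tup (S k'))
  end.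

(* The induced action on functionals: [c] is carried to [c o node_perm pi'], with values
   transported recursively; [pi'] is meant to be the inverse of [pi]. *)
Fixpoint fun_perm (n : nat) (pi' : nat -> R n -> R n) (k : nat) : R k -> R k :=
  match k return R k -> R k with
  | 0 => fun v => v
  | S k' => fun (c : R (S k')) =>
      (fun (x : Tup k') m => option_map (fun_perm n pi' k') (c (node_perm n pi' k' x) m))
        : R (S k')
  end.

Definition inv_perms n (pi pi' : nat -> R n -> R n) : Prop :=
  (forall i v, pi' i (pi i v) = v) /\ (forall i v, pi i (pi' i v) = v) /\
  (forall i v, inA n v -> inA n (pi i v)) /\ (forall i v, inA n v -> inA n (pi' i v)).

Lemma inv_perms_sym n pi pi' : inv_perms n pi pi' -> inv_perms n pi' pi.
Proof. intros [a [b [c d]]]. repeat split; auto. Qed.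

Section NodePerm.

Variables (n : nat) (pi pi' : nat -> R n -> R n).
Hypothesis PP : inv_perms n pi pi'.

Lemma lastc_node_perm k x :
  lastc k (node_perm n pi k x) = mapi (level_perm n pi k) 0 (lastc k x).
Proof. destruct k; reflexivity. Qed.

Lemma lh_node_perm k x : lh k (node_perm n pi k x) = lh k x.
Proof. unfold lh. rewrite lastc_node_perm. apply mapi_length. Qed.

Lemma leT_node_perm k x y : leT k x y -> leT k (node_perm n pi k x) (node_perm n pi k y).
Proof.
  induction k; simpl. apply mapi_prefix.
  intros [H1 H2]. split; auto. now apply mapi_prefix.
Qed.

Lemma valid_node_perm k x : validD k x -> validD k (node_perm n pi k x).
Proof.
  induction k. auto. intros [H1 [H2 H3]]. split; [|split].
  - apply IHk, H1.
  - apply (mapi_Forall (inA (S k))); [apply level_perm_inA, PP|exact H2].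
  - simpl. rewrite mapi_length, lh_node_perm. exact H3.
Qed.

Lemma node_perm_cancel k x : node_perm n pi' k (node_perm n pi k x) = x.
Proof.
  induction k; simpl.
  - apply (@mapi_cancel (R 0)), level_perm_cancel, PP.
  - destruct x as [x1 x2]. simpl. rewrite IHk. f_equal. apply mapi_cancel, level_perm_cancel, PP.
Qed.

Lemma root_node_perm k : node_perm n pi k (rootT k) = rootT k.
Proof. induction k; simpl; auto. now rewrite IHk. Qed.

Lemma node_perm_below k x : k < n -> node_perm n pi k x = x.
Proof.
  induction k; intros H; simpl.
  - apply mapi_id. intros. now rewrite level_perm_other by lia.
  - destruct x as [x1 x2]. simpl. rewrite IHk by lia. f_equal.
    apply mapi_id. intros. now rewrite level_perm_other by lia.
Qed.

Lemma trunc_opt_node_perm k j x :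
  trunc_opt k j (node_perm n pi k x) = option_map (node_perm n pi j) (trunc_opt k j x).
Proof.
  unfold trunc_opt. destruct (le_dec j k); auto.
  generalize (eq_sym (Nat.sub_add j k l)). generalize (k - j). intros d e. subst k. simpl.
  simpl. f_equal. clear l. induction d; simpl; auto.
Qed.

End NodePerm.

Lemma node_perm_fix_at_level n pi (y : Tup n) :
  (forall u, u < lh n y -> pi u (nth u (lastc n y) (dflt n)) = nth u (lastc n y) (dflt n)) ->
  node_perm n pi n y = y.
Proof.
  intros H. destruct n as [|n']; simpl.
  - rewrite level_perm_same. apply (mapi_fix pi 0 y 0). intros m Hm. apply H. exact Hm.
  - destruct y as [y1 y2]. simpl. rewrite node_perm_below by lia. f_equal.
    rewrite level_perm_same. apply (mapi_fix pi 0 y2 (dflt (S n'))). intros m Hm. apply H, Hm.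
Qed.

Lemma node_perm_fix n pi k x xn : trunc_opt k n x = Some xn ->
  (forall u, u < lh n xn -> pi u (nth u (lastc n xn) (dflt n)) = nth u (lastc n xn) (dflt n)) ->
  node_perm n pi k x = x.
Proof.
  unfold trunc_opt. destruct (le_dec n k) as [l|l]; [|discriminate].
  generalize (eq_sym (Nat.sub_add n k l)). generalize (k - n). intros d e. subst k. simpl.
  intros E H. injection E as <-. apply node_perm_fix_at_level in H.
  clear l. revert x H. induction d; simpl; auto.
  intros [x1 x2] H. simpl in *. rewrite IHd by auto.
  f_equal. apply mapi_id. intros. rewrite level_perm_other by lia. reflexivity.
Qed.

Lemma valid_node_perm_iff n pi pi' k x : inv_perms n pi pi' ->
  (validD k (node_perm n pi k x) <-> validD k x).
Proof.
  intros PP. split; intros H.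
  - rewrite <- (node_perm_cancel n pi pi' PP k x).
    apply (valid_node_perm n pi' pi (inv_perms_sym _ _ _ PP)), H.
  - exact (valid_node_perm n pi pi' PP k x H).
Qed.

Lemma leT_node_perm_iff n pi pi' k x y : inv_perms n pi pi' ->
  (leT k (node_perm n pi k x) (node_perm n pi k y) <-> leT k x y).
Proof.
  intros PP. split; intros H; [|exact (leT_node_perm n pi k x y H)].
  rewrite <- (node_perm_cancel n pi pi' PP k x), <- (node_perm_cancel n pi pi' PP k y).
  now apply leT_node_perm.
Qed.

Lemma node_perm_path n pi pi' k P : inv_perms n pi pi' -> isPath k (validD k) P ->
  isPath k (validD k) (fun z => P (node_perm n pi k z)).
Proof.
  intros PP [[C1 C2] M]. pose proof (inv_perms_sym _ _ _ PP) as PP'.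
  split; [split|].
  - intros z Hz. apply (valid_node_perm_iff n pi pi' k z PP), C1, Hz.
  - intros a b Ha Hb. rewrite <- (leT_node_perm_iff n pi pi' k a b PP),
    <- (leT_node_perm_iff n pi pi' k b a PP). now apply C2.
  - intros Q [Q1 Q2] PQ z Qz.
    assert (HQ : chain k (validD k) (fun w => Q (node_perm n pi' k w))).
    { split.
      - intros w Hw. apply (valid_node_perm_iff n pi' pi k w PP'), Q1, Hw.
      - intros a b Ha Hb. rewrite <- (leT_node_perm_iff n pi' pi k a b PP'),
          <- (leT_node_perm_iff n pi' pi k b a PP'). now apply Q2. }
    apply (M _ HQ).
    + intros w Pw. apply PQ. now rewrite node_perm_cancel by exact PP'.
    + now rewrite node_perm_cancel by exact PP.
Qed.

Lemma barred_node_perm n pi pi' k b (Q1 Q2 : Tup k -> Prop) : inv_perms n pi pi' ->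
  (forall beta, Q1 beta <-> Q2 (node_perm n pi k beta)) ->
  (barred k b Q1 <-> barred k (node_perm n pi k b) Q2).
Proof.
  intros PP HQ. pose proof (inv_perms_sym _ _ _ PP) as PP'. split.
  - intros B P HP Pb. destruct (B _ (node_perm_path n pi pi' k P PP HP) Pb) as [beta [Pbeta Qb]].
    exists (node_perm n pi k beta). split; auto. now apply HQ.
  - intros B P HP Pb.
    assert (Pb' : P (node_perm n pi' k (node_perm n pi k b))) by now rewrite node_perm_cancel.
    destruct (B _ (node_perm_path n pi' pi k P PP' HP) Pb') as [beta [Pbeta Qb]].
    exists (node_perm n pi' k beta). split; auto.
    apply HQ. now rewrite node_perm_cancel.
Qed.

Section FunPerm.

Variables (n : nat) (pi pi' : nat -> R n -> R n).
Hypothesis PP : inv_perms n pi pi'.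

Lemma fun_perm_cancel k c : fun_perm n pi k (fun_perm n pi' k c) = c.
Proof.
  induction k; simpl; auto.
  apply functional_extensionality; intros x. apply functional_extensionality; intros m.
  rewrite (node_perm_cancel n pi pi' PP). destruct (c x m); simpl; auto. now rewrite IHk.
Qed.

Lemma inA_fun_perm k c : inA k c -> inA k (fun_perm n pi' k c).
Proof.
  pose proof (inv_perms_sym _ _ _ PP) as PP'. revert c. induction k; intros c. auto.
  intros [Hr [Hm Hc]]. split; [|split].
  - intros x m v. simpl. destruct (c (node_perm n pi' k x) m) as [v0|] eqn:E; [|discriminate].
    intros H. injection H as <-. destruct (Hr _ _ _ E) as [V I]. split.
    + now apply (valid_node_perm_iff n pi' pi k x PP').
    + now apply IHk.
  - intros x y Vx Vy L m v. simpl.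
    destruct (c (node_perm n pi' k x) m) as [v0|] eqn:E; [|discriminate].
    intros H. rewrite (Hm (node_perm n pi' k x) (node_perm n pi' k y)) with (v := v0); auto.
    1, 2: now apply (valid_node_perm n pi' pi PP').
    now apply leT_node_perm.
  - intros P HP m.
    destruct (Hc _ (node_perm_path n pi pi' k P PP HP) m) as [z [Pz Dz]].
    exists (node_perm n pi k z). split; auto. simpl.
    rewrite (node_perm_cancel n pi pi' PP). destruct (c z m); simpl; congruence.
Qed.

Lemma fun_perm_Sfun k c : fun_perm n pi' k (Sfun k c) = Sfun k (fun_perm n pi' k c).
Proof.
  revert c. induction k; intros c; simpl; auto.
  apply functional_extensionality; intros x. apply functional_extensionality; intros m.
  destruct (c (node_perm n pi' k x) m); simpl; auto. now rewrite IHk.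
Qed.

Lemma fun_perm_K_val k : fun_perm n pi' k (K_val k) = K_val k.
Proof.
  induction k; simpl; auto.
  apply functional_extensionality; intros x. apply functional_extensionality; intros m.
  pose proof (valid_node_perm_iff n pi' pi k x (inv_perms_sym _ _ _ PP)) as Hv.
  rewrite !Kc_eq. do 2 destruct excluded_middle_informative; simpl; try tauto.
  now rewrite IHk.
Qed.

Lemma fun_perm_below k c : k <= n -> fun_perm n pi' k c = c.
Proof.
  revert c. induction k; intros c H; simpl; auto.
  apply functional_extensionality; intros x. apply functional_extensionality; intros m.
  rewrite node_perm_below by lia. destruct (c x m); simpl; auto. rewrite IHk; auto. lia.
Qed.

(* A lawlike functional is defined everywhere already at the root, so by monotonicity its
   values do not depend on the node. *)
Lemma fun_perm_lawlike c : inB n c -> fun_perm n pi' (S n) c = c.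
Proof.
  intros [[Hr [Hm _]] Hroot].
  apply functional_extensionality; intros x. apply functional_extensionality; intros m. simpl.
  replace (option_map (fun_perm n pi' n) (c (node_perm n pi' n x) m))
    with (c (node_perm n pi' n x) m)
    by (destruct (c (node_perm n pi' n x) m); simpl; auto; f_equal; symmetry;
        apply fun_perm_below; lia).
  destruct (c (rootT n) m) as [v|] eqn:E; [|exfalso; exact (Hroot m E)].
  destruct (classic (validD n x)) as [V|V].
  - assert (V' : validD n (node_perm n pi' n x))
      by exact (valid_node_perm n pi' pi (inv_perms_sym _ _ _ PP) n x V).
    rewrite (Hm (rootT n) x) with (v := v), (Hm (rootT n) (node_perm n pi' n x)) with (v := v).
    all: first [reflexivity | exact E | exact V | exact V' | apply valid_root | apply leT_root].
  - destruct (c x m) as [v1|] eqn:E1; [exfalso; apply V, (Hr _ _ _ E1)|].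
    destruct (c (node_perm n pi' n x) m) as [v2|] eqn:E2; auto. exfalso. apply V.
    apply (valid_node_perm_iff n pi' pi n x (inv_perms_sym _ _ _ PP)), (Hr _ _ _ E2).
Qed.

Lemma fun_perm_inj k x y : fun_perm n pi' k x = fun_perm n pi' k y -> x = y.
Proof. intros E. now rewrite <- (fun_perm_cancel k x), E, fun_perm_cancel. Qed.

End FunPerm.

Lemma fun_perm_dom n pi pi' k m c : inv_perms n pi pi' ->
  dom k m c -> dom k m (fun_perm n pi' (S m) c).
Proof.
  intros PP. pose proof (inv_perms_sym _ _ _ PP) as PP'. destruct k; unfold dom.
  - apply (inA_fun_perm n pi pi' PP (S m) c).
  - intros [HA Hr]. split; [apply (inA_fun_perm n pi pi' PP (S m) c HA)|].
    intros u. simpl. rewrite root_node_perm.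
    destruct (c (rootT m) u) eqn:E; simpl; [discriminate|]. exfalso; exact (Hr u E).
  - intros [xi [Hb He]].
    exists (fun u v => fun_perm n pi' m (xi u (level_perm n pi' m u v))). split.
    + intros u. apply isBij_comp with (g := fun_perm n pi' m).
      * apply isBij_inv with (h := fun_perm n pi m).
        -- exact (inA_fun_perm n pi pi' PP m).
        -- exact (inA_fun_perm n pi' pi PP' m).
        -- exact (fun_perm_cancel n pi pi' PP m).
        -- exact (fun_perm_cancel n pi' pi PP' m).
      * apply isBij_comp with (g := xi u); [apply Hb|].
        apply isBij_inv with (h := level_perm n pi m u).
        1, 2: apply level_perm_inA, PP.
        1, 2: apply level_perm_cancel, PP.
    + intros x u. simpl. destruct (He (node_perm n pi' m x) u) as [E1 E2].
      rewrite lh_node_perm, (valid_node_perm_iff n pi' pi m x PP') in E1, E2. split.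
      * intros C. rewrite (E1 C). simpl. rewrite lastc_node_perm, mapi_nth; [reflexivity|].
        apply C.
      * intros N. now rewrite (E2 N).
Qed.

Definition env_perm n (pi' : nat -> R n -> R n) (rho : env) : env :=
  mkEnv (e0 rho) (fun k m i => fun_perm n pi' (S m) (eV rho k m i)).

Lemma ev_env_perm s n pi pi' b rho : inv_perms n pi pi' -> forall m (t : tm m),
  ev s (node_perm n pi (pred s) b) (env_perm n pi' rho) t =
  option_map (fun_perm n pi' m) (ev s b rho t).
Proof.
  intros PP m t. induction t; cbn [ev]; try reflexivity.
  - rewrite IHt. destruct (ev s b rho t); reflexivity.
  - rewrite IHt1, IHt2. destruct (ev s b rho t1), (ev s b rho t2); reflexivity.
  - rewrite IHt1, IHt2. destruct (ev s b rho t1), (ev s b rho t2); reflexivity.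
  - simpl. f_equal. symmetry. apply (fun_perm_K_val n pi pi' PP (S n0)).
  - rewrite IHt. destruct (ev s b rho t); auto. cbn [option_map]. f_equal.
    symmetry. apply fun_perm_Sfun.
  - rewrite IHt1, IHt2, trunc_opt_node_perm.
    destruct (ev s b rho t1) as [f|]; simpl; auto.
    destruct (ev s b rho t2) as [u|]; simpl; auto.
    destruct (trunc_opt (pred s) n0 b) as [y|]; simpl; auto.
    now rewrite (node_perm_cancel n pi pi' PP).
Qed.

Lemma env_perm_updV n pi' rho k m i c k' m' i' :
  eV (env_perm n pi' (updV rho k m i c)) k' m' i' =
  eV (updV (env_perm n pi' rho) k m i (fun_perm n pi' (S m) c)) k' m' i'.
Proof.
  destruct (classic (k = k' /\ m = m' /\ i = i')) as [[<- [<- <-]]|N].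
  - rewrite updV_same. unfold env_perm. cbn [eV]. now rewrite updV_same.
  - rewrite updV_other by exact N. unfold env_perm. cbn [eV]. now rewrite updV_other.
Qed.

Lemma option_map_common_value {A B} (f : A -> B) (a b : option A) :
  (forall x y, f x = f y -> x = y) ->
  ((exists v, a = Some v /\ b = Some v) <->
   (exists w, option_map f a = Some w /\ option_map f b = Some w)).
Proof.
  intros Inj. split.
  - intros [v [-> ->]]. now exists (f v).
  - intros [w [Ea Eb]]. destruct a as [x|], b as [y|]; try discriminate.
    injection Ea; injection Eb; intros <- E. exists x. split; auto. f_equal. now apply Inj.
Qed.

Section ForcePerm.

Variables (s n : nat) (pi pi' : nat -> R n -> R n).
Hypothesis PP : inv_perms n pi pi'.

Let k := pred s.

Lemma node_perm_all (Phi : Tup k -> Prop) :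
  (forall beta, Phi (node_perm n pi k beta)) <-> (forall gamma, Phi gamma).
Proof.
  split; auto. intros H g.
  rewrite <- (node_perm_cancel n pi' pi (inv_perms_sym _ _ _ PP) k g). apply H.
Qed.

Lemma node_perm_all_ex (Phi : Tup k -> Prop) :
  (exists beta, Phi (node_perm n pi k beta)) <-> (exists gamma, Phi gamma).
Proof.
  split; [intros [b H]; eauto|]. intros [g H]. exists (node_perm n pi' k g).
  now rewrite (node_perm_cancel n pi' pi (inv_perms_sym _ _ _ PP)).
Qed.

Lemma dom_fun_perm_all kd m (Phi : R (S m) -> Prop) :
  (forall c, dom kd m c -> Phi (fun_perm n pi' (S m) c)) <-> (forall c, dom kd m c -> Phi c).
Proof.
  split; intros H c D.
  - rewrite <- (fun_perm_cancel n pi' pi (inv_perms_sym _ _ _ PP) (S m) c).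
    apply H. apply (fun_perm_dom n pi' pi); [apply inv_perms_sym, PP|exact D].
  - apply H. exact (fun_perm_dom n pi pi' kd m c PP D).
Qed.

Lemma dom_fun_perm_ex kd m (Phi : R (S m) -> Prop) :
  (exists c, dom kd m c /\ Phi (fun_perm n pi' (S m) c)) <-> (exists c, dom kd m c /\ Phi c).
Proof.
  split; intros [c [D H]].
  - exists (fun_perm n pi' (S m) c). split; auto. exact (fun_perm_dom n pi pi' kd m c PP D).
  - exists (fun_perm n pi (S m) c).
    split; [apply (fun_perm_dom n pi' pi); [apply inv_perms_sym, PP|exact D]|].
    now rewrite (fun_perm_cancel n pi' pi (inv_perms_sym _ _ _ PP)).
Qed.

Lemma force_updV_env_perm p b rho kd m i c :
  force s b (env_perm n pi' (updV rho kd m i c)) p <->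
  force s b (updV (env_perm n pi' rho) kd m i (fun_perm n pi' (S m) c)) p.
Proof. apply force_ext; [reflexivity|]. apply env_perm_updV. Qed.

Lemma extension_node_perm beta m (F1 F2 : Tup k -> Prop) :
  (forall g, F1 g <-> F2 (node_perm n pi k g)) ->
  (exists g, validD k g /\ leT k beta g /\ lh k g = m /\ F1 g) <->
  (exists g, validD k g /\ leT k (node_perm n pi k beta) g /\ lh k g = m /\ F2 g).
Proof.
  intros HF. symmetry. rewrite <- node_perm_all_ex.
  split; intros [g H]; exists g; revert H;
    rewrite (valid_node_perm_iff n pi pi' k g PP), (leT_node_perm_iff n pi pi' k _ _ PP),
      lh_node_perm, <- HF; tauto.
Qed.

Lemma force_node_perm p : forall b rho,
  force s b rho p <-> force s (node_perm n pi k b) (env_perm n pi' rho) p.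
Proof.
  pose proof (barred_node_perm n pi pi' k) as Bar.
  pose proof (valid_node_perm_iff n pi pi' k) as Val.
  pose proof (leT_node_perm_iff n pi pi' k) as Le.
  induction p; intros b rho.
  - simpl. tauto.
  - apply Bar; [exact PP|]. intros beta. rewrite !(ev_env_perm s n pi pi' beta rho PP).
    apply option_map_common_value, (fun_perm_inj n pi pi' PP).
  - simpl. rewrite IHp1, IHp2. tauto.
  - apply Bar; [exact PP|]. intros beta. simpl. now rewrite IHp1, IHp2.
  - simpl. etransitivity; [|apply (node_perm_all (fun g =>
      validD k g -> leT k g (node_perm n pi k b) ->
      force s g (env_perm n pi' rho) p1 -> force s g (env_perm n pi' rho) p2))].
    cbv beta. setoid_rewrite (Val _ PP). setoid_rewrite (Le _ _ PP).
    setoid_rewrite <- IHp1. setoid_rewrite <- IHp2. tauto.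
  - split; intros H c; [apply (IHp b (upd0 rho i c))|apply <- (IHp b (upd0 rho i c))]; apply H.
  - apply Bar; [exact PP|]. intros beta. simpl. split; intros [c H]; exists c;
      [apply (IHp beta (upd0 rho i c))|apply <- (IHp beta (upd0 rho i c))]; apply H.
  - etransitivity; [|exact (dom_fun_perm_all k0 n0
      (fun c => force s (node_perm n pi k b) (updV (env_perm n pi' rho) k0 n0 i c) p))].
    split; intros H c D; specialize (H c D).
    + now apply force_updV_env_perm, (IHp b).
    + now apply (IHp b), force_updV_env_perm.
  - apply Bar; [exact PP|]. intros beta.
    etransitivity; [|exact (dom_fun_perm_ex k0 n0
      (fun c => force s (node_perm n pi k beta) (updV (env_perm n pi' rho) k0 n0 i c) p))].
    split; intros [c [D H]]; exists c; split; auto.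
    + now apply force_updV_env_perm, (IHp beta).
    + now apply (IHp beta), force_updV_env_perm.
  - apply Bar; [exact PP|]. intros beta. simpl.
    rewrite (ev_env_perm s n pi pi' beta rho PP).
    destruct (ev s beta rho t) as [m|]; simpl; [|split; intros [? [? _]]; discriminate].
    split; intros [m' [Em H]]; injection Em as <-; exists m; split; auto;
      revert H; apply (extension_node_perm beta m (fun g => force s g rho p)
                         (fun g => force s g (env_perm n pi' rho) p) (fun g => IHp g rho)).
Qed.

End ForcePerm.

Lemma force_below_fixed_node s n pi pi' p al be rho : inv_perms n pi pi' ->
  validD (pred s) al -> leT (pred s) be al -> node_perm n pi' (pred s) al = al ->
  force s al rho p -> force s be (env_perm n pi' rho) p.
Proof.
  intros PP Val Lbe Fal Hp.
  rewrite <- (node_perm_cancel n pi' pi (inv_perms_sym _ _ _ PP) (pred s) be).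
  apply (proj1 (force_node_perm s n pi pi' PP p _ rho)).
  apply (force_mono s p al); [exact Val| |exact Hp].
  rewrite <- Fal. now apply leT_node_perm.
Qed.

(** * (LL3) *)

Lemma inL_nuL n c : inL n c -> exists xi, (forall m, isBij (inA n) (xi m)) /\ c = nuL n xi.
Proof.
  intros [xi [B E]]. exists xi. split; [exact B|].
  apply functional_extensionality; intros x. apply functional_extensionality; intros m.
  unfold nuL. destruct excluded_middle_informative as [C|C]; now apply E.
Qed.

Lemma forced_nuL_agree s n rho x y g h be ben xiG xiH : x <> y ->
  validD (pred s) be -> trunc_opt (pred s) n be = Some ben ->
  eV rho KL n g = nuL n xiG -> eV rho KL n h = nuL n xiH -> e0 rho x <= lh n ben ->
  force s be rho
    (Fall_lt y x (Feq n (tAp n (tV KL n g) (tvar0 y)) (tAp n (tV KL n h) (tvar0 y)))) ->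
  forall u, u < e0 rho x ->
    xiG u (nth u (lastc n ben) (dflt n)) = xiH u (nth u (lastc n ben) (dflt n)).
Proof.
  intros hxy Vbe Eben EG EH Hx H u Hu.
  pose proof (force_Fall_lt_elim s be rho x y _ hxy Vbe H u Hu) as Hfu.
  destruct (barred_witness _ _ _ Vbe Hfu) as [ga [Vga [Cga [v [E1 E2]]]]].
  rewrite !ev_Ap_var, !upd0_eV, upd0_same, EG, EH in *.
  destruct (trunc_opt (pred s) n ga) as [gan|] eqn:Egan; [|discriminate].
  destruct (trunc_opt_valid _ _ _ _ Vga Egan) as [Vgan Lgan].
  unfold nuL in E1, E2. destruct excluded_middle_informative as [[_ Hg]|]; [|discriminate].
  injection E1 as <-. injection E2 as E2.
  rewrite (nth_lastc_comparable n ben gan); [auto| |lia|lia].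
  destruct Cga; [right|left]; eapply trunc_opt_leT; eauto.
Qed.

Definition binv {A} (Q : A -> Prop) (g : A -> A) (w : A) : A :=
  match excluded_middle_informative (exists v, Q v /\ g v = w) with
  | left e => proj1_sig (constructive_indefinite_description _ e)
  | right _ => w
  end.

Lemma binv_spec {A} (Q : A -> Prop) g w : isBij Q g -> Q w -> Q (binv Q g w) /\ g (binv Q g w) = w.
Proof.
  intros [_ [_ B3]] Qw. unfold binv. destruct excluded_middle_informative as [e|N].
  - destruct (constructive_indefinite_description _ e) as [v Hv]. exact Hv.
  - exfalso. apply N, B3, Qw.
Qed.

Lemma binv_cancel {A} (Q : A -> Prop) g v : isBij Q g -> Q v -> binv Q g (g v) = v.
Proof.
  intros B Qv. pose proof B as [B1 [B2 _]].
  destruct (binv_spec Q g (g v) B (B1 v Qv)) as [H1 H2]. apply B2; auto.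
Qed.

Definition transposer n (xi1 xi2 : nat -> R n -> R n) : nat -> R n -> R n :=
  fun u v => if excluded_middle_informative (inA n v) then binv (inA n) (xi1 u) (xi2 u v) else v.

Section Transposer.

Variables (n : nat) (xi1 xi2 : nat -> R n -> R n).
Hypotheses (B1 : forall u, isBij (inA n) (xi1 u)) (B2 : forall u, isBij (inA n) (xi2 u)).

Lemma inA_transposer u v : inA n v -> inA n (transposer n xi1 xi2 u v).
Proof.
  intros Iv. unfold transposer. destruct excluded_middle_informative; [|contradiction].
  apply binv_spec; auto. apply (proj1 (B2 u)), Iv.
Qed.

Lemma transposer_spec u v : inA n v -> xi1 u (transposer n xi1 xi2 u v) = xi2 u v.
Proof.
  intros Iv. unfold transposer. destruct excluded_middle_informative; [|contradiction].
  apply binv_spec; auto. apply (proj1 (B2 u)), Iv.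
Qed.

Lemma transposer_fixed u v : inA n v -> xi1 u v = xi2 u v -> transposer n xi1 xi2 u v = v.
Proof.
  intros Iv E. unfold transposer. destruct excluded_middle_informative; [|contradiction].
  rewrite <- E. now apply binv_cancel.
Qed.

End Transposer.

Lemma transposer_cancel n xi1 xi2 :
  (forall u, isBij (inA n) (xi1 u)) -> (forall u, isBij (inA n) (xi2 u)) ->
  forall u v, transposer n xi2 xi1 u (transposer n xi1 xi2 u v) = v.
Proof.
  intros B1 B2 u v. destruct (classic (inA n v)) as [Iv|Iv].
  - unfold transposer at 1. destruct excluded_middle_informative as [_|N].
    + rewrite transposer_spec by auto. now apply binv_cancel.
    + exfalso. now apply N, inA_transposer.
  - unfold transposer. now do 2 destruct excluded_middle_informative.
Qed.

Lemma transposer_inv_perms n xi1 xi2 :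
  (forall u, isBij (inA n) (xi1 u)) -> (forall u, isBij (inA n) (xi2 u)) ->
  inv_perms n (transposer n xi1 xi2) (transposer n xi2 xi1).
Proof.
  intros B1 B2. split; [|split; [|split]]; auto using transposer_cancel.
  - intros u v. now apply inA_transposer.
  - intros u v. now apply inA_transposer.
Qed.

Lemma fun_perm_nuL n pi pi' xi1 xi2 : inv_perms n pi pi' ->
  (forall u v, inA n v -> xi1 u (pi' u v) = xi2 u v) ->
  fun_perm n pi' (S n) (nuL n xi1) = nuL n xi2.
Proof.
  intros PP H.
  apply functional_extensionality; intros z. apply functional_extensionality; intros u.
  pose proof (valid_node_perm_iff n pi' pi n z (inv_perms_sym _ _ _ PP)) as Hv.
  cbn [fun_perm]. unfold nuL. rewrite lh_node_perm.
  destruct excluded_middle_informative as [[Vz Hu]|C1];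
    destruct excluded_middle_informative as [C2|C2]; try tauto; try reflexivity.
  simpl. rewrite fun_perm_below by lia. f_equal.
  rewrite lastc_node_perm, level_perm_same, mapi_nth by exact Hu.
  apply H, Forall_nth; [now apply valid_lastc|exact Hu].
Qed.

Lemma env_perm_fixed s n pi pi' rho k m i : inv_perms n pi pi' -> envOK s rho -> S n <= s ->
  m <= n -> (m = n -> k = KA) -> eV (env_perm n pi' rho) k m i = eV rho k m i.
Proof.
  intros PP ok hn Hmn Hk. unfold env_perm. cbn [eV].
  destruct (Nat.eq_dec m n) as [->|N].
  - rewrite (Hk eq_refl). apply (fun_perm_lawlike n pi pi' PP), (ok KA n i hn).
  - apply fun_perm_below. lia.
Qed.

Lemma agree_env_perm s n h pi pi' rho p Gv : inv_perms n pi pi' -> envOK s rho -> S n <= s ->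
  (forall k m i, freeV k m i p -> m <= n) -> (forall i, ~ freeV KF n i p) ->
  (forall i, freeV KL n i p -> i = h) -> fun_perm n pi' (S n) (eV rho KL n h) = Gv ->
  agree p (env_perm n pi' rho) (updV rho KL n h Gv).
Proof.
  intros PP ok hn Hsort HnoF HL EG. split; [reflexivity|]. intros k m i Hf.
  destruct (classic (KL = k /\ n = m /\ h = i)) as [[<- [<- <-]]|N].
  - now rewrite updV_same.
  - rewrite updV_other by exact N.
    apply env_perm_fixed with (s := s) (pi := pi); [exact PP|exact ok|exact hn|eapply Hsort, Hf|].
    intros ->. destruct k; [exfalso; eapply HnoF; eauto|reflexivity|].
    exfalso. apply N. split; auto. split; auto. symmetry. now apply HL.
Qed.

(* A lawless [G] that agrees with [H] on the first [lh alpha] arguments is the image of [H]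
   under an automorphism fixing [alpha] and every other free variable of [p]. *)
Lemma LL3_holds s n h g x y p : S n <= s ->
  (forall k m i, freeV k m i p -> m <= n) -> (forall i, ~ freeV KF n i p) ->
  (forall i, freeV KL n i p -> i = h) -> g <> h -> freefor n h g p -> x <> y -> ~ free0 x p ->
  forall rho, envOK s rho -> root_forces s rho (LL3 n h g x y p).
Proof.
  intros hn Hsort HnoF HL hgh FF hxy hx rho ok al Val _ Hp.
  assert (hnk : n <= pred s) by lia.
  apply barred_here. exists (lh (pred s) al). intros Gv HG be Vbe Lbe Hag.
  set (rho2 := updV (upd0 rho x (lh (pred s) al)) KL n g Gv) in Hag |- *.
  change (force s be rho2 (Fall_lt y x
    (Feq n (tAp n (tV KL n g) (tvar0 y)) (tAp n (tV KL n h) (tvar0 y))))) in Hag.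
  destruct (inL_nuL n _ (ok KL n h hn)) as [xiH [BH EH]].
  destruct (inL_nuL n Gv HG) as [xiG [BG EG]].
  destruct (trunc_opt_some (pred s) n al hnk) as [aln Ealn].
  destruct (trunc_opt_valid _ _ _ _ Val Ealn) as [Valn Lal].
  destruct (trunc_opt_some (pred s) n be hnk) as [ben Eben].
  destruct (trunc_opt_valid _ _ _ _ Vbe Eben) as [Vben Lbe'].
  pose proof (leT_lh _ _ _ Lbe) as Hlh.
  assert (Agr : forall u, u < lh n aln ->
    xiH u (nth u (lastc n aln) (dflt n)) = xiG u (nth u (lastc n aln) (dflt n))).
  { intros u Hu. symmetry.
    rewrite (nth_lastc_comparable n aln ben); [|right; eapply trunc_opt_leT; eauto|lia|lia].
    apply (forced_nuL_agree s n rho2 x y g h be ben xiG xiH); auto.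
    - unfold rho2. now rewrite updV_same.
    - unfold rho2. rewrite updV_other; [exact EH|]. intros [_ [_ ?]]. congruence.
    - cbn [e0 rho2 updV]. rewrite upd0_same. lia.
    - cbn [e0 rho2 updV]. rewrite upd0_same. lia. }
  set (pi := transposer n xiG xiH). set (pi' := transposer n xiH xiG).
  assert (PP : inv_perms n pi pi') by now apply transposer_inv_perms.
  assert (Fal : node_perm n pi' (pred s) al = al).
  { apply (node_perm_fix n pi' (pred s) al aln Ealn). intros u Hu.
    apply transposer_fixed; auto. apply Forall_nth; [now apply valid_lastc|exact Hu]. }
  apply force_renL_fresh; auto.
  apply (force_agree s p be (env_perm n pi' rho)).
  2: exact (force_below_fixed_node s n pi pi' p al be rho PP Val Lbe Fal Hp).
  apply (agree_env_perm s n h pi pi' rho p Gv PP ok hn Hsort HnoF HL).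
  rewrite EH, EG. apply (fun_perm_nuL n pi pi' xiH xiG PP).
  intros u v Iv. now apply transposer_spec.
Qed.

Theorem theorem8p1 (s : nat) (hs : 1 <= s) :
  (forall n x y F f, S n <= s -> x <> y ->
     forall rho, envOK s rho -> root_forces s rho (LL1 n x y F f)) /\
  (forall n f g, S n <= s ->
     forall rho, envOK s rho -> root_forces s rho (LL2 n f g)) /\
  (forall n h g x y (p : fm), S n <= s ->
     wfLP s p ->
     (forall k m i, freeV k m i p -> m <= n) ->
     (forall i, ~ freeV KF n i p) ->
     (forall i, freeV KL n i p -> i = h) ->
     g <> h -> freefor n h g p ->
     x <> y -> ~ free0 x p ->
     forall rho, envOK s rho -> root_forces s rho (LL3 n h g x y p)).
Proof.
  split; [|split].
  - intros n x y F f hn hxy rho ok. now apply LL1_holds.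
  - intros n f g _ rho _. apply LL2_holds.
  - intros n h g x y p hn _ Hsort HnoF HL hgh FF hxy hx rho ok. now apply LL3_holds.
Qed.
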